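(* Let $p_1<p_2<\cdots$ be the rational primes. For each $N$, let $\{Z_i^k: i\ge1,\ 1\le k\le N\}$ be independent Bernoulli random variables with $\mathbb{P}[Z_i^k=1]=1/p_i$, and define \[ \Delta'_N:=\max_{1\le k<j\le N}\ \max_i\ Z_i^jZ_i^k\log p_i . \] Fix $\delta\in(0,\infty)$ and let $\varphi_N=\varphi_N[\delta]$ be defined as below. Then \[ \liminf_{N\to\infty}\mathbb{P}\big[\Delta'_N\ge\log\varphi_N[\delta]\big]\ge 1-e^{-\delta}. \]
   Context: For $\delta\in(0,\infty)$ and $N\ge1$, $\varphi_N=\varphi_N[\delta]>1$ is the unique real number satisfying $\int_{\varphi_N}^{2\varphi_N}\frac{N^2\,dx}{2x^2\log x}=\delta$. *)

From Stdlib Require Import Reals Lra Lia ZArith Arith List Znumtheory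
  Classical ClassicalDescription.
Open Scope R_scope.

Definition ind (P : Prop) : R :=
  if excluded_middle_informative P then 1 else 0.

(* A configuration z i k = Z_i^k (row i = prime index, column k = copy). *)
Definition config := nat -> nat -> bool.

Definition upd (z : config) (i k : nat) (b : bool) : config :=
  fun i' k' => if (Nat.eqb i' i && Nat.eqb k' k)%bool then b else z i' k'.

(* Expectation of f under the product of independent Bernoulli(1/p_i)
   variables placed on the (distinct) cells listed; all other cells are 0. *)
Fixpoint expect (p : nat -> nat) (cells : list (nat * nat)) (f : config -> R) : R :=
  match cells with
  | nil => f (fun _ _ => false)
  | (i, k) :: cs =>
      / INR (p i) * expect p cs (fun z => f (upd z i k true))
      + (1 - / INR (p i)) * expect p cs (fun z => f (upd z i k false))
  end.

Definition cells (M N : nat) : list (nat * nat) := list_prod (seq 0 M) (seq 0 N).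

Definition DeltaGe (p : nat -> nat) (N : nat) (c : R) (z : config) : Prop :=
  exists i k j, (k < j < N)%nat /\ z i k = true /\ z i j = true /\ c <= ln (INR (p i)).

(* Probability of {Delta'_N >= c} when only the primes p_0..p_{M-1} are used;
   the true probability is the limit as M -> infinity. *)
Definition probM (p : nat -> nat) (N M : nat) (c : R) : R :=
  expect p (cells M N) (fun z => ind (DeltaGe p N c z)).

Definition is_phi (delta : R) (N : nat) (v : R) : Prop :=
  1 < v /\
  exists pr : Riemann_integrable (fun x => (INR N) ^ 2 / (2 * x ^ 2 * ln x)) v (2 * v),
    RiemannInt pr = delta.

From Pilot Require Import Defs.
From Stdlib Require Import Reals Lra Lia ZArith Arith List Znumtheory.
From Stdlib Require Import Classical ClassicalDescription.
From mathcomp Require ssreflect ssrbool ssrfun eqtype ssrnat div prime bigop.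
From Coquelicot Require Coquelicot.
Open Scope R_scope.

(* Let c = log phi_N.  If Delta'_N < c then, for every prime p >= phi_N, at most one of
   the N variables Z_p^1, ..., Z_p^N equals 1.  Distinct primes are independent, and for a
   single prime the probability of at most one success is at most
   1 - binom(N,2) p^-2 (1 - N/p) <= exp(- binom(N,2) p^-2 (1 - N/p)), so
   P[Delta'_N < c] <= exp(- binom(N,2) (1 - N/phi_N) sum_{p >= phi_N} p^-2).
   Chebyshev's estimates (A - eps) n <= theta(n) <= (6/5 A + eps) n, with A = 0.9212...,
   and partial summation give sum_{p >= x} p^-2 >= (11/20) / (x log x) for large x.
   The defining integral yields delta <= N^2 / (4 phi_N log phi_N) and phi_N / N -> oo,
   so the exponent eventually exceeds delta.  Truncating to the first M primes, the
   probabilities increase in M and so converge; the limit inherits the bound. *)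

(* [Rtopology.ind] would otherwise shadow the indicator of [Defs]. *)
Notation ind := Defs.ind.

Fixpoint sumR (f : nat -> R) (n : nat) : R :=
  match n with O => 0 | S m => sumR f m + f m end.

Fixpoint prodR (f : nat -> R) (n : nat) : R :=
  match n with O => 1 | S m => prodR f m * f m end.

Lemma sumR_ext f g n : (forall i, (i < n)%nat -> f i = g i) -> sumR f n = sumR g n.
Proof. induction n; intros H; simpl; auto. rewrite IHn, H; auto. Qed.

Lemma sumR_plus f g n : sumR (fun i => f i + g i) n = sumR f n + sumR g n.
Proof. induction n; simpl; [lra | rewrite IHn; ring]. Qed.

Lemma sumR_scal a f n : sumR (fun i => a * f i) n = a * sumR f n.
Proof. induction n; simpl; [ring | rewrite IHn; ring]. Qed.

Lemma sumR_opp f n : sumR (fun i => - f i) n = - sumR f n.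
Proof. induction n; simpl; [ring | rewrite IHn; ring]. Qed.

Lemma sumR_le f g n : (forall i, (i < n)%nat -> f i <= g i) -> sumR f n <= sumR g n.
Proof. induction n; intros H; simpl; [lra | apply Rplus_le_compat; auto]. Qed.

Lemma sumR_zero n : sumR (fun _ => 0) n = 0.
Proof. induction n; simpl; lra. Qed.

Lemma sumR_nonneg f n : (forall i, (i < n)%nat -> 0 <= f i) -> 0 <= sumR f n.
Proof. intros H. rewrite <- (sumR_zero n). apply sumR_le; auto. Qed.

Lemma sumR_const a n : sumR (fun _ => a) n = INR n * a.
Proof. induction n; simpl sumR; [simpl; ring | rewrite IHn, S_INR; ring]. Qed.

Lemma sumR_le_mono f n m : (forall i, 0 <= f i) -> (n <= m)%nat -> sumR f n <= sumR f m.
Proof. intros H Hnm. induction Hnm; simpl; [lra | specialize (H m); lra]. Qed.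

Lemma sumR_ge_term f n i : (forall j, 0 <= f j) -> (i < n)%nat -> f i <= sumR f n.
Proof.
  intros H Hi. induction n as [|n IH]; [lia|]. simpl.
  destruct (Nat.eq_dec i n) as [->|Hin].
  - pose proof (sumR_nonneg f n (fun j _ => H j)). lra.
  - pose proof (H n). pose proof (IH ltac:(lia)). lra.
Qed.

Lemma sumR_split_at f a b : (a <= b)%nat ->
  sumR f b = sumR f a + sumR (fun i => f (a + i)%nat) (b - a).
Proof.
  intros H. induction H; [rewrite Nat.sub_diag; simpl; ring|].
  rewrite Nat.sub_succ_l by auto. simpl. rewrite IHle.
  replace (a + (m - a))%nat with m by lia. ring.
Qed.

Lemma sumR_shift f d : sumR f (S d) = f 0%nat + sumR (fun i => f (S i)) d.
Proof. induction d; simpl in *; [ring | rewrite IHd; ring]. Qed.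

Lemma prodR_le_exp_sumR f g n :
  (forall i, (i < n)%nat -> 0 <= f i <= exp (- g i)) ->
  0 <= prodR f n <= exp (- sumR g n).
Proof.
  induction n as [|n IH]; intros H; simpl.
  - rewrite Ropp_0, exp_0. lra.
  - rewrite Ropp_plus_distr, exp_plus.
    destruct (IH (fun i Hi => H i ltac:(lia))). destruct (H n ltac:(lia)).
    split; [apply Rmult_le_pos | apply Rmult_le_compat]; lra.
Qed.

Lemma ind_iff (P Q : Prop) : (P <-> Q) -> ind P = ind Q.
Proof.
  intros H. unfold ind.
  destruct (excluded_middle_informative P), (excluded_middle_informative Q); tauto.
Qed.

Lemma ind_true (P : Prop) : P -> ind P = 1.
Proof. unfold ind. destruct (excluded_middle_informative P); tauto. Qed.

Lemma ind_false (P : Prop) : ~ P -> ind P = 0.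
Proof. unfold ind. destruct (excluded_middle_informative P); tauto. Qed.

Lemma ind_bounds (P : Prop) : 0 <= ind P <= 1.
Proof. unfold ind. destruct (excluded_middle_informative P); lra. Qed.

Lemma ind_le (P Q : Prop) : (P -> Q) -> ind P <= ind Q.
Proof.
  intros H. destruct (classic P) as [HP|HP].
  - rewrite !ind_true; auto; lra.
  - rewrite ind_false by auto. apply ind_bounds.
Qed.

Lemma upd_same z i k b : upd z i k b i k = b.
Proof. unfold upd. rewrite !Nat.eqb_refl. reflexivity. Qed.

Lemma upd_other z i k b i' k' : (i' <> i \/ k' <> k) -> upd z i k b i' k' = z i' k'.
Proof.
  unfold upd. intros [H|H]; apply Nat.eqb_neq in H; rewrite H;
    [|rewrite Bool.andb_false_r]; reflexivity.
Qed.

(** * Expectations over independent Bernoulli cells *)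

Section Expectation.
Variable p : nat -> nat.

(* [expect p cs f] with the cells outside [cs] frozen at [z0] instead of [false];
   this is what makes [expect] compositional in the list of cells. *)
Fixpoint expect_from (cs : list (nat * nat)) (z0 : config) (f : config -> R) : R :=
  match cs with
  | nil => f z0
  | (i, k) :: cs' =>
      / INR (p i) * expect_from cs' z0 (fun z => f (upd z i k true))
      + (1 - / INR (p i)) * expect_from cs' z0 (fun z => f (upd z i k false))
  end.

Lemma expectE cs f : expect p cs f = expect_from cs (fun _ _ => false) f.
Proof. revert f; induction cs as [|[i k] cs IH]; intros f; simpl; rewrite ?IH; auto. Qed.

Lemma expect_from_ext_in (Inv : config -> Prop) cs z0 f g :
  (forall i k, In (i, k) cs -> forall z b, Inv z -> Inv (upd z i k b)) ->
  Inv z0 -> (forall z, Inv z -> f z = g z) -> expect_from cs z0 f = expect_from cs z0 g.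
Proof.
  revert f g; induction cs as [|[i k] cs IH]; intros f g Hinv H0 Hfg; simpl; auto.
  assert (Hinv' : forall i' k', In (i', k') cs -> forall z b, Inv z -> Inv (upd z i' k' b))
    by (intros; apply Hinv; simpl; auto).
  assert (Hstep : forall b z, Inv z -> f (upd z i k b) = g (upd z i k b))
    by (intros; apply Hfg, Hinv; simpl; auto).
  rewrite (IH (fun z => f (upd z i k true)) (fun z => g (upd z i k true))),
    (IH (fun z => f (upd z i k false)) (fun z => g (upd z i k false))); auto.
Qed.

Lemma expect_from_ext cs z0 f g :
  (forall z, f z = g z) -> expect_from cs z0 f = expect_from cs z0 g.
Proof. intros H. apply (expect_from_ext_in (fun _ => True)); auto. Qed.

Lemma expect_from_const cs z0 a : expect_from cs z0 (fun _ => a) = a.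
Proof. induction cs as [|[i k] cs IH]; simpl; rewrite ?IH; auto; ring. Qed.

Lemma expect_from_plus cs z0 f g :
  expect_from cs z0 (fun z => f z + g z) = expect_from cs z0 f + expect_from cs z0 g.
Proof. revert f g; induction cs as [|[i k] cs IH]; intros f g; simpl; rewrite ?IH; auto; ring. Qed.

Lemma expect_from_scal cs z0 a f :
  expect_from cs z0 (fun z => a * f z) = a * expect_from cs z0 f.
Proof. revert f; induction cs as [|[i k] cs IH]; intros f; simpl; rewrite ?IH; auto; ring. Qed.

Lemma expect_from_cat cs1 cs2 z0 f :
  expect_from (cs1 ++ cs2) z0 f = expect_from cs2 z0 (fun z => expect_from cs1 z f).
Proof.
  revert f; induction cs1 as [|[i k] cs IH]; intros f; simpl; auto.
  rewrite !IH, <- expect_from_scal, <- (expect_from_scal _ _ (1 - _)), <- expect_from_plus.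
  reflexivity.
Qed.

Lemma expect_from_mulr_invariant cs z0 f g :
  (forall i k, In (i, k) cs -> forall z b, g (upd z i k b) = g z) ->
  expect_from cs z0 (fun z => f z * g z) = expect_from cs z0 f * g z0.
Proof.
  revert f g; induction cs as [|[i k] cs IH]; intros f g Hg; simpl; auto.
  assert (Hg' : forall i' k', In (i', k') cs -> forall z b, g (upd z i' k' b) = g z)
    by (intros; apply Hg; simpl; auto).
  rewrite (expect_from_ext _ _ _ (fun z => f (upd z i k true) * g z)),
    (expect_from_ext _ _ (fun z => f (upd z i k false) * g (upd z i k false))
       (fun z => f (upd z i k false) * g z)), !IH by (intros; rewrite ?Hg; simpl; auto).
  ring.
Qed.

Hypothesis p_ge1 : forall i, 1 <= INR (p i).

Lemma inv_p_bounds i : 0 < / INR (p i) <= 1.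
Proof.
  pose proof (p_ge1 i). split; [apply Rinv_0_lt_compat; lra|].
  rewrite <- Rinv_1. apply Rinv_le_contravar; lra.
Qed.

Lemma expect_from_le_rel (Rel : config -> config -> Prop) cs :
  (forall i k, In (i, k) cs -> forall z z' b, Rel z z' -> Rel (upd z i k b) (upd z' i k b)) ->
  forall f g z0 z1, Rel z0 z1 -> (forall z z', Rel z z' -> f z <= g z') ->
  expect_from cs z0 f <= expect_from cs z1 g.
Proof.
  induction cs as [|[i k] cs IH]; intros Hrel f g z0 z1 H0 Hfg; simpl; auto.
  pose proof (inv_p_bounds i).
  assert (Hrel' : forall i' k', In (i', k') cs ->
            forall z z' b, Rel z z' -> Rel (upd z i' k' b) (upd z' i' k' b))
    by (intros; apply Hrel; simpl; auto).
  apply Rplus_le_compat; apply Rmult_le_compat_l; try lra;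
    apply IH; auto; intros z z' Hz; apply Hfg, Hrel; simpl; auto.
Qed.

Lemma expect_from_le cs z0 f g :
  (forall z, f z <= g z) -> expect_from cs z0 f <= expect_from cs z0 g.
Proof. intros H. apply (expect_from_le_rel eq); intros; subst; auto. Qed.

End Expectation.

Definition row (i n : nat) : list (nat * nat) := map (fun k => (i, k)) (seq 0 n).

Lemma row_S i n : row i (S n) = row i n ++ (i, n) :: nil.
Proof. unfold row. rewrite seq_S, map_app. reflexivity. Qed.

Lemma in_row i n i' k : In (i', k) (row i n) -> i' = i /\ (k < n)%nat.
Proof.
  unfold row. rewrite in_map_iff. intros [x [Hx Hin]]. inversion Hx; subst.
  apply in_seq in Hin. split; auto; lia.
Qed.

Lemma cells_S M N : cells (S M) N = cells M N ++ row M N.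
Proof.
  unfold cells. rewrite seq_S.
  assert (Hcat : forall A B (l1 l2 : list A) (l : list B),
             list_prod (l1 ++ l2) l = list_prod l1 l ++ list_prod l2 l)
    by (induction l1; intros; simpl; rewrite ?IHl1, ?app_assoc; auto).
  rewrite Hcat. simpl. rewrite app_nil_r. reflexivity.
Qed.

Lemma in_cells M N i k : In (i, k) (cells M N) -> (i < M)%nat.
Proof. unfold cells. rewrite in_prod_iff. intros [H _]. apply in_seq in H. lia. Qed.

Definition row_empty (i n : nat) (z : config) : Prop :=
  forall k, (k < n)%nat -> z i k = false.

Definition row_no_pair (i n : nat) (z : config) : Prop :=
  forall k j, (k < j < n)%nat -> ~ (z i k = true /\ z i j = true).

(* Probability that at most one of [n] independent Bernoulli([w]) variables is 1,
   by conditioning on the last one. *)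
Fixpoint prob_no_pair (w : R) (n : nat) : R :=
  match n with O => 1 | S n' => w * (1 - w) ^ n' + (1 - w) * prob_no_pair w n' end.

Section Row.
Variable p : nat -> nat.
Variables (i n : nat) (b : bool).

Lemma upd_row_keeps_last :
  forall i' k, In (i', k) (row i n) -> forall z b', z i n = b -> upd z i' k b' i n = b.
Proof.
  intros i' k Hin z b' Hz. apply in_row in Hin. destruct Hin as [-> Hk].
  rewrite upd_other; auto. right; lia.
Qed.

Lemma expect_row_S_last z0 (f g : config -> R) :
  (forall z, z i n = b -> f z = g z) ->
  expect_from p (row i n) (upd z0 i n b) f = expect_from p (row i n) (upd z0 i n b) g.
Proof.
  intros H. apply (expect_from_ext_in p (fun z => z i n = b)); auto.
  - exact upd_row_keeps_last.
  - apply upd_same.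
Qed.

End Row.

Lemma expect_row_empty p i n z0 :
  expect_from p (row i n) z0 (fun z => ind (row_empty i n z)) = (1 - / INR (p i)) ^ n.
Proof.
  revert z0; induction n as [|n IH]; intros z0.
  - simpl. apply ind_true. intros k Hk; lia.
  - rewrite row_S, expect_from_cat. simpl.
    rewrite (expect_row_S_last p i n true z0 _ (fun _ => 0)),
      (expect_row_S_last p i n false z0 _ (fun z => ind (row_empty i n z))).
    + rewrite expect_from_const, IH. ring.
    + intros z Hz. apply ind_iff. split; intros H k Hk; auto.
      destruct (Nat.eq_dec k n); subst; auto. apply H; lia.
    + intros z Hz. apply ind_false. intros H. specialize (H n ltac:(lia)). congruence.
Qed.

Lemma expect_row_no_pair p i n z0 :
  expect_from p (row i n) z0 (fun z => ind (row_no_pair i n z)) = prob_no_pair (/ INR (p i)) n.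
Proof.
  revert z0; induction n as [|n IH]; intros z0.
  - simpl. apply ind_true. intros k j Hk; lia.
  - rewrite row_S, expect_from_cat. simpl.
    rewrite (expect_row_S_last p i n true z0 _ (fun z => ind (row_empty i n z))),
      (expect_row_S_last p i n false z0 _ (fun z => ind (row_no_pair i n z))).
    + rewrite expect_row_empty, IH. ring.
    + intros z Hz. apply ind_iff. split; intros H k j Hkj [H1 H2].
      * apply (H k j); auto; lia.
      * destruct (Nat.eq_dec j n); [subst; congruence | apply (H k j); auto; lia].
    + intros z Hz. apply ind_iff. split.
      * intros H k Hk. destruct (z i k) eqn:E; auto. exfalso. apply (H k n); auto; lia.
      * intros H k j Hkj [H1 H2]. destruct (Nat.eq_dec j n); subst.
        -- rewrite H in H1; [discriminate | lia].
        -- rewrite H in H2; [discriminate | lia].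
Qed.

Section NoPairProduct.
Variable p : nat -> nat.
Hypothesis p_ge1 : forall i, 1 <= INR (p i).
Variables (N : nat) (c : R).

Definition row_factor (m : nat) (z : config) : R :=
  if Rle_dec c (ln (INR (p m))) then ind (row_no_pair m N z) else 1.

Definition row_factor_mean (m : nat) : R :=
  if Rle_dec c (ln (INR (p m))) then prob_no_pair (/ INR (p m)) N else 1.

Lemma row_factor_upd m i k b z : i <> m -> row_factor m (upd z i k b) = row_factor m z.
Proof.
  intros H. unfold row_factor. destruct (Rle_dec _ _); auto. apply ind_iff.
  unfold row_no_pair. split; intros H0 k0 j0 Hkj;
    specialize (H0 k0 j0 Hkj); rewrite ?upd_other in * by auto; auto.
Qed.

Lemma expect_prod_row_factor M z0 :
  expect_from p (cells M N) z0 (fun z => prodR (fun m => row_factor m z) M)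
  = prodR row_factor_mean M.
Proof.
  revert z0; induction M as [|M IH]; intros z0; simpl; [reflexivity|].
  rewrite cells_S, expect_from_cat.
  rewrite (expect_from_ext p _ _ _ (fun z => prodR row_factor_mean M * row_factor M z)).
  2: { intros z. rewrite expect_from_mulr_invariant, IH; auto.
       intros i k Hin z' b. apply row_factor_upd. apply in_cells in Hin. lia. }
  rewrite expect_from_scal. f_equal. unfold row_factor, row_factor_mean.
  destruct (Rle_dec _ _); [apply expect_row_no_pair | apply expect_from_const].
Qed.

Lemma row_factor_bounds m z : 0 <= row_factor m z <= 1.
Proof. unfold row_factor. destruct (Rle_dec _ _); [apply ind_bounds | lra]. Qed.

Lemma prodR_row_factor_not_DeltaGe M z :
  ~ DeltaGe p N c z -> prodR (fun m => row_factor m z) M = 1.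
Proof.
  intros H. induction M; simpl; auto. rewrite IHM. unfold row_factor.
  destruct (Rle_dec _ _); [|ring]. rewrite ind_true; [ring|].
  intros k j Hkj [H1 H2]. apply H. exists M, k, j. auto.
Qed.

Lemma one_sub_ind_DeltaGe_le M z :
  1 - ind (DeltaGe p N c z) <= prodR (fun m => row_factor m z) M.
Proof.
  destruct (classic (DeltaGe p N c z)) as [H|H].
  - rewrite ind_true by auto.
    assert (0 <= prodR (fun m => row_factor m z) M); [|lra].
    induction M; simpl; [lra|]. apply Rmult_le_pos; [auto | apply row_factor_bounds].
  - rewrite ind_false, prodR_row_factor_not_DeltaGe by auto. lra.
Qed.

Lemma probM_ge_one_sub_prod M : 1 - prodR row_factor_mean M <= probM p N M c.
Proof.
  unfold probM. rewrite expectE, <- (expect_prod_row_factor M (fun _ _ => false)).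
  pose proof (expect_from_le p p_ge1 (cells M N) (fun _ _ => false) _ _
                (one_sub_ind_DeltaGe_le M)) as H.
  rewrite (expect_from_ext p _ _ _ (fun z => 1 + (-1) * ind (DeltaGe p N c z))) in H
    by (intros; ring).
  rewrite expect_from_plus, expect_from_const, expect_from_scal in H. lra.
Qed.

Lemma probM_le_S M : probM p N M c <= probM p N (S M) c.
Proof.
  unfold probM. rewrite !expectE, cells_S, expect_from_cat.
  rewrite <- (expect_from_const p (row M N) (fun _ _ => false)) at 1.
  apply (expect_from_le p p_ge1). intros z.
  apply (expect_from_le_rel p p_ge1 (fun z z' => forall i k, z i k = true -> z' i k = true)).
  - intros i k _ z1 z2 b H i' k'. unfold upd. destruct (_ && _)%bool; auto.
  - discriminate.
  - intros z1 z2 Hle. apply ind_le.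
    intros (i & k & j & H1 & H2 & H3 & H4). exists i, k, j; auto.
Qed.

Lemma probM_le1 M : probM p N M c <= 1.
Proof.
  unfold probM. rewrite expectE, <- (expect_from_const p (cells M N) (fun _ _ => false) 1).
  apply (expect_from_le p p_ge1). intros; apply ind_bounds.
Qed.

End NoPairProduct.

(* [binom(n,2) w^2 (1 - n w)]: a lower bound for the probability of at least two
   successes among [n] Bernoulli([w]) trials. *)
Definition pair_mass (n : nat) (w : R) : R :=
  INR n * (INR n - 1) / 2 * w ^ 2 * (1 - INR n * w).

Lemma INR_mul_pred_nonneg n : 0 <= INR n * (INR n - 1).
Proof. destruct n; [simpl; lra|]. rewrite S_INR. pose proof (pos_INR n). nra. Qed.

Lemma pow_one_sub_le_bonferroni w n : 0 <= w <= 1 ->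
  (1 - w) ^ n <= 1 - INR n * w + INR n * (INR n - 1) / 2 * w ^ 2.
Proof.
  intros Hw. induction n as [|n IH]; [simpl; lra|].
  rewrite S_INR. simpl pow.
  apply Rle_trans with ((1 - w) * (1 - INR n * w + INR n * (INR n - 1) / 2 * w ^ 2)).
  - apply Rmult_le_compat_l; lra.
  - pose proof (INR_mul_pred_nonneg n).
    assert (0 <= INR n * (INR n - 1) / 2 * w ^ 3)
      by (apply Rmult_le_pos; [lra | apply pow_le; lra]).
    simpl in *. nra.
Qed.

Lemma prob_no_pair_bounds w n : 0 <= w <= 1 -> 0 <= prob_no_pair w n <= 1.
Proof.
  intros Hw. induction n; simpl; [lra|].
  pose proof (pow_le (1 - w) n ltac:(lra)).
  pose proof (pow_incr (1 - w) 1 n ltac:(lra)). rewrite pow1 in *.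
  split; nra.
Qed.

Lemma prob_no_pair_le w n : 0 <= w <= 1 -> prob_no_pair w n <= 1 - pair_mass n w.
Proof.
  intros Hw. unfold pair_mass. induction n as [|n IH]; [simpl; lra|].
  simpl prob_no_pair. pose proof (pow_one_sub_le_bonferroni w n Hw). rewrite S_INR.
  apply Rle_trans with (w * (1 - INR n * w + INR n * (INR n - 1) / 2 * w ^ 2)
    + (1 - w) * (1 - INR n * (INR n - 1) / 2 * w ^ 2 * (1 - INR n * w))).
  { apply Rplus_le_compat; apply Rmult_le_compat_l; lra. }
  pose proof (pos_INR n). pose proof (INR_mul_pred_nonneg n).
  assert (Hgap : 0 <= INR n * INR n + INR n - INR n * (INR n - 1) / 2 * (1 - INR n * w)).
  { destruct (Rle_dec 0 (1 - INR n * w)).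
    - assert (INR n * (INR n - 1) / 2 * (1 - INR n * w) <= INR n * (INR n - 1) / 2 * 1)
        by (apply Rmult_le_compat_l; nra).
      nra.
    - nra. }
  assert (0 <= w * w ^ 2 * (INR n * INR n + INR n - INR n * (INR n - 1) / 2 * (1 - INR n * w)))
    by (apply Rmult_le_pos; [apply Rmult_le_pos; [lra | apply pow_le; lra] | lra]).
  assert (E : 1 - (INR n + 1) * (INR n + 1 - 1) / 2 * w ^ 2 * (1 - (INR n + 1) * w)
    - (w * (1 - INR n * w + INR n * (INR n - 1) / 2 * w ^ 2)
       + (1 - w) * (1 - INR n * (INR n - 1) / 2 * w ^ 2 * (1 - INR n * w)))
    = w * w ^ 2 * (INR n * INR n + INR n - INR n * (INR n - 1) / 2 * (1 - INR n * w)))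
    by field.
  lra.
Qed.

Definition pair_mass_above (p : nat -> nat) (N : nat) (c : R) (m : nat) : R :=
  if Rle_dec c (ln (INR (p m))) then pair_mass N (/ INR (p m)) else 0.

Lemma probM_ge_one_sub_exp p N c M : (forall i, 1 <= INR (p i)) ->
  1 - exp (- sumR (pair_mass_above p N c) M) <= probM p N M c.
Proof.
  intros p_ge1.
  assert (Hfac : forall m, 0 <= row_factor_mean p N c m <= exp (- pair_mass_above p N c m)).
  { intros m. unfold row_factor_mean, pair_mass_above.
    pose proof (inv_p_bounds p p_ge1 m). destruct (Rle_dec _ _).
    - pose proof (prob_no_pair_bounds (/ INR (p m)) N ltac:(lra)).
      pose proof (prob_no_pair_le (/ INR (p m)) N ltac:(lra)).
      pose proof (exp_ineq1_le (- pair_mass N (/ INR (p m)))). lra.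
    - rewrite Ropp_0, exp_0. lra. }
  pose proof (prodR_le_exp_sumR _ _ M (fun m _ => Hfac m)).
  pose proof (probM_ge_one_sub_prod p p_ge1 N c M). lra.
Qed.

Definition primeb (n : nat) : bool := prime.prime n.

Definition ln_fact (n : nat) : R := sumR (fun m => ln (INR (S m))) n.

(* Legendre's formula [ln n! = sum_{q prime} ln q * sum_k floor(n / q^(k+1))],
   with the primes cut at [P] and the exponents at [K]. *)
Definition legendre_sum (n P K : nat) : R :=
  sumR (fun q => if primeb q
                 then ln (INR q) * sumR (fun k => INR (n / q ^ S k)%nat) K else 0) P.

Module NatPrime.
Import ssreflect ssrbool ssrfun eqtype ssrnat div prime bigop.
Local Open Scope nat_scope.

Lemma divn_div m d : divn m d = Nat.div m d.
Proof.
  case: d => [|d]; first by rewrite divn0.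
  apply: (Nat.div_unique m d.+1 (divn m d.+1) (modn m d.+1)).
  - apply/ltP. by rewrite ltn_mod.
  - rewrite {1}(divn_eq m d.+1) -plusE -multE. lia.
Qed.

Lemma expn_pow m n : expn m n = Nat.pow m n.
Proof. elim: n => [|n IH]; first by rewrite expn0. by rewrite expnS IH -multE /= Nat.mul_comm. Qed.

Lemma ln_prod_pfactor m P : ln (INR (\prod_(0 <= q < P) q ^ logn q m)) =
  sumR (fun q => if primeb q then (ln (INR q) * INR (logn q m))%R else 0%R) P.
Proof.
  elim: P => [|P IH]; first by rewrite big_geq //= ln_1.
  rewrite big_nat_recr //= -multE mult_INR ln_mult; last first.
  - apply: lt_0_INR; apply/ltP; exact: pfactor_gt0.
  - apply: lt_0_INR; apply/ltP; apply: prodn_gt0 => i; exact: pfactor_gt0.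
  rewrite IH /primeb. f_equal. case pP: (prime P).
  - rewrite expn_pow pow_INR ln_pow; first by rewrite Rmult_comm.
    apply: lt_0_INR; apply/ltP; exact: prime_gt0.
  - by rewrite lognE pP expn0 /= ln_1.
Qed.

Lemma ln_factorization m P : 0 < m -> m < P ->
  ln (INR m) = sumR (fun q => if primeb q then (ln (INR q) * INR (logn q m))%R else 0%R) P.
Proof.
  move=> m0 mP. rewrite -ln_prod_pfactor. case: P mP => [|P] // mP.
  by rewrite -(@widen_partn P predT m) // partnT.
Qed.

Lemma logn_count_dvd q m K : prime q -> 0 < m -> m <= K ->
  INR (logn q m) = sumR (fun k => if q ^ k.+1 %| m then 1%R else 0%R) K.
Proof.
  move=> qp m0 mK.
  have H K' : sumR (fun k => if q ^ k.+1 %| m then 1%R else 0%R) K' = INR (minn K' (logn q m)).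
  { elim: K' => [|K' IH]; first by rewrite min0n.
    rewrite /= IH pfactor_dvdn //. case: (ltnP K' (logn q m)) => h.
    - by rewrite (minn_idPl h) S_INR.
    - by rewrite (minn_idPr (leqW h)) Rplus_0_r. }
  rewrite H (minn_idPr _) //. apply: ltnW; apply: leq_trans (ltn_logl _ m0) mK.
Qed.

Lemma legendre_sum_S n P K : n.+1 < P -> n.+1 <= K ->
  legendre_sum n.+1 P K = (legendre_sum n P K + ln (INR n.+1))%R.
Proof.
  move=> hP hK. rewrite /legendre_sum (@ln_factorization n.+1 P) // -sumR_plus.
  apply: sumR_ext => q _. rewrite /primeb. case qP: (prime q); last by rewrite Rplus_0_r.
  rewrite (@logn_count_dvd q n.+1 K) // -Rmult_plus_distr_l -sumR_plus. f_equal.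
  apply: sumR_ext => k _. rewrite -!divn_div -!expn_pow divnS; last by rewrite expn_gt0 prime_gt0.
  rewrite plus_INR Rplus_comm. by case: (q ^ k.+1 %| n.+1).
Qed.

Lemma ln_fact_legendre n P K : (n < P)%coq_nat -> (n <= K)%coq_nat ->
  ln_fact n = legendre_sum n P K.
Proof.
  move=> /ltP hP /leP hK. elim: n hP hK => [|n IH] hP hK.
  - rewrite /ln_fact /legendre_sum /=. rewrite -(sumR_zero P). apply: sumR_ext => q _.
    case: (primeb q) => //.
    rewrite (@sumR_ext _ (fun _ => 0%R)); first by rewrite sumR_zero Rmult_0_r.
    move=> k _. by rewrite Nat.Div0.div_0_l.
    by rewrite sumR_zero.
  - rewrite legendre_sum_S // -IH //; exact: ltnW.
Qed.

Lemma dvdn_Zdivide d n : 0 < n -> d %| n <-> (Z.of_nat d | Z.of_nat n)%Z.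
Proof.
  move=> n0. split.
  - move/dvdnP=> [k ->]. exists (Z.of_nat k). by rewrite -multE Nat2Z.inj_mul.
  - move=> [c Hc]. apply/dvdnP. exists (Z.to_nat c).
    have hn : (0 < Z.of_nat n)%Z by move/ltP: n0 => n0; lia.
    have hc : (0 <= c)%Z by nia.
    apply: Nat2Z.inj. by rewrite -multE Nat2Z.inj_mul Z2Nat.id.
Qed.

Lemma primeb_prime n : Znumtheory.prime (Z.of_nat n) <-> primeb n = true.
Proof.
  rewrite /primeb. split.
  - move/prime_alt => [H1 H2]. apply/primeP. have n1 : 1 < n by apply/ltP; lia.
    split => // d dn. have n0 : 0 < n by apply: ltnW.
    have dle := dvdn_leq n0 dn.
    have d0 : 0 < d.
    { case: d dn {dle} => // /dvdnP [k]. rewrite muln0 => Hk. by rewrite Hk in n0. }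
    apply/orP. move/leP: dle => dle. move/ltP: d0 => d0.
    case: (Nat.eq_dec d 1) => [->|e1]; first by left.
    case: (Nat.eq_dec d n) => [->|e2]; first by right.
    exfalso. apply: (H2 (Z.of_nat d)); first lia. by apply/dvdn_Zdivide.
  - move/primeP=> [n1 Hd]. apply/prime_alt. split; first by move/ltP: n1 => n1; lia.
    move=> m [hm1 hm2] hdiv.
    have hmz : m = Z.of_nat (Z.to_nat m) by rewrite Z2Nat.id //; lia.
    rewrite hmz in hdiv. have n0 : 0 < n by apply: ltnW.
    move/(dvdn_Zdivide (Z.to_nat m) n n0): hdiv => /Hd /orP [/eqP e|/eqP e]; lia.
Qed.

Lemma primeb_ge2 n : primeb n = true -> (2 <= n)%coq_nat.
Proof. rewrite /primeb => /prime_gt1 /ltP. lia. Qed.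

End NatPrime.

(** * Chebyshev's estimates *)

Lemma ln_le x y : 0 < x -> x <= y -> ln x <= ln y.
Proof. intros Hx [Hxy | ->]; [left; apply ln_increasing | right]; auto. Qed.

Lemma ln_le_sub1 x : 0 < x -> ln x <= x - 1.
Proof. intros Hx. pose proof (exp_ineq1_le (ln x)). rewrite exp_ln in H by auto. lra. Qed.

Lemma ln_nonneg x : 1 <= x -> 0 <= ln x.
Proof. intros. rewrite <- ln_1. apply ln_le; lra. Qed.

Lemma ln_INR_nonneg q : (1 <= q)%nat -> 0 <= ln (INR q).
Proof. intros Hq. apply ln_nonneg. apply (le_INR 1). auto. Qed.

Lemma ln_div x y : 0 < x -> 0 < y -> ln (x / y) = ln x - ln y.
Proof. intros. unfold Rdiv. rewrite ln_mult, ln_Rinv; try apply Rinv_0_lt_compat; auto. Qed.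

Lemma ln_ge1 x : 3 <= x -> 1 <= ln x.
Proof. intros. rewrite <- (ln_exp 1). apply ln_le; [apply exp_pos | pose proof exp_le_3; lra]. Qed.

Lemma ln_le_2sqrt y : 0 < y -> ln y <= 2 * sqrt y.
Proof.
  intros Hy. assert (Hs : 0 < sqrt y) by (apply sqrt_lt_R0; auto).
  replace (ln y) with (2 * ln (sqrt y)).
  - pose proof (ln_le_sub1 (sqrt y) Hs). lra.
  - rewrite <- (sqrt_sqrt y) at 2 by lra. rewrite ln_mult by auto. ring.
Qed.

Lemma INR_eventually_ge x : exists n0 : nat, forall n, (n0 <= n)%nat -> x <= INR n.
Proof.
  destruct (archimed x) as [H1 _]. exists (Z.to_nat (up x)). intros n Hn.
  apply le_INR in Hn. destruct (Z_lt_le_dec (up x) 0) as [Hneg|Hpos].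
  - pose proof (IZR_lt _ _ Hneg). pose proof (pos_INR n). lra.
  - rewrite INR_IZR_INZ, Z2Nat.id in Hn by lia. lra.
Qed.

Lemma INR_div_bounds n j : (0 < j)%nat -> INR (n / j) <= INR n / INR j < INR (n / j) + 1.
Proof.
  intros Hj. pose proof (Nat.div_mod_eq n j) as Hnj.
  assert (Hj' : 0 < INR j) by (apply lt_0_INR; lia).
  assert (Hm : INR (n mod j) < INR j) by (apply lt_INR, Nat.mod_upper_bound; lia).
  pose proof (pos_INR (n mod j)).
  assert (E : INR n / INR j = INR (n / j) + INR (n mod j) / INR j).
  { rewrite Hnj at 1. rewrite plus_INR, mult_INR. field. lra. }
  rewrite E. assert (0 <= INR (n mod j) / INR j < 1); [|lra].
  split; [apply Rle_mult_inv_pos; lra|].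
  apply Rmult_lt_reg_r with (INR j); [lra|]. unfold Rdiv. rewrite Rmult_assoc, Rinv_l; lra.
Qed.

Lemma div_le_self n j : (n / j <= n)%nat.
Proof. destruct j; [simpl; lia | apply Nat.Div0.div_le_upper_bound; nia]. Qed.

Lemma div_div_comm n j q : (n / j / q = n / q / j)%nat.
Proof. rewrite !Nat.Div0.div_div, Nat.mul_comm. reflexivity. Qed.

Lemma sumR_trunc_leb f m n : (m <= n)%nat ->
  sumR f (S m) = sumR (fun q => if Nat.leb q m then f q else 0) (S n).
Proof.
  intros H. induction H as [|n H IH].
  - apply sumR_ext. intros i Hi. replace (Nat.leb i m) with true; auto.
    symmetry; apply Nat.leb_le; lia.
  - rewrite IH. change (sumR ?g (S (S n))) with (sumR g (S n) + g (S n)).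
    cbv beta. replace (Nat.leb (S n) m) with false by (symmetry; apply Nat.leb_gt; lia).
    ring.
Qed.

Lemma sumR_count_leb s m :
  sumR (fun q => if Nat.leb q s then 1 else 0) m = INR (Nat.min m (S s)).
Proof.
  induction m; [reflexivity|]. simpl sumR. rewrite IHm. destruct (Nat.leb m s) eqn:E.
  - apply Nat.leb_le in E. rewrite !Nat.min_l by lia. rewrite S_INR; ring.
  - apply Nat.leb_gt in E. rewrite !Nat.min_r by lia. ring.
Qed.

Definition theta (n : nat) : R := sumR (fun q => if primeb q then ln (INR q) else 0) (S n).

Lemma theta_S n : theta (S n) = theta n + (if primeb (S n) then ln (INR (S n)) else 0).
Proof. reflexivity. Qed.

Lemma theta_le n m : (n <= m)%nat -> theta n <= theta m.
Proof.
  intros H. induction H; [lra|]. rewrite theta_S. destruct (primeb (S m)); [|lra].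
  pose proof (ln_INR_nonneg (S m) ltac:(lia)). lra.
Qed.

(* Chebyshev's weight [nu(q) = q - [q/2] - [q/3] - [q/5] + [q/30]]: it has period 30 in
   the sense [nu(q + 30) = nu(q)], takes only the values 0 and 1, and is 1 on [1, 5]. *)
Definition cheb_nu (q : nat) : R :=
  INR q - INR (q / 2) - INR (q / 3) - INR (q / 5) + INR (q / 30).

Lemma cheb_nu_nat_bounds q :
  (q / 2 + q / 3 + q / 5 <= q + q / 30 <= q / 2 + q / 3 + q / 5 + 1)%nat.
Proof.
  pose proof (Nat.div_mod_eq q 30) as Hq.
  set (t := (q / 30)%nat) in *. set (r := (q mod 30)%nat) in *.
  assert (Hr : (r < 30)%nat) by (apply Nat.mod_upper_bound; lia).
  assert (Hdiv : forall d e, (d * e = 30)%nat -> (q / d = e * t + r / d)%nat).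
  { intros d e Hde. rewrite Hq. replace (30 * t + r)%nat with (e * t * d + r)%nat by nia.
    apply Nat.div_add_l. lia. }
  rewrite (Hdiv 2%nat 15%nat), (Hdiv 3%nat 10%nat), (Hdiv 5%nat 6%nat) by reflexivity.
  assert (Hsmall : (r / 2 + r / 3 + r / 5 <= r <= r / 2 + r / 3 + r / 5 + 1)%nat).
  { clearbody r. clear - Hr. do 30 (destruct r as [|r]; [simpl; lia|]). lia. }
  lia.
Qed.

Lemma cheb_nu_bounds q : 0 <= cheb_nu q <= 1.
Proof.
  destruct (cheb_nu_nat_bounds q) as [H1 H2]. apply le_INR in H1, H2.
  rewrite !plus_INR in H1, H2. change (INR 1) with 1 in H2. rewrite plus_INR in H2.
  unfold cheb_nu. lra.
Qed.

Lemma cheb_nu_0 : cheb_nu 0 = 0.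
Proof. unfold cheb_nu. simpl. lra. Qed.

Lemma cheb_nu_1_5 q : (1 <= q <= 5)%nat -> cheb_nu q = 1.
Proof.
  intros H. unfold cheb_nu.
  assert (q = 1 \/ q = 2 \/ q = 3 \/ q = 4 \/ q = 5)%nat as Hq by lia.
  destruct Hq as [->|[->|[->|[->| ->]]]]; simpl; lra.
Qed.

Lemma cheb_nu_div_le n d : (d <> 0)%nat -> cheb_nu (n / d) <= if Nat.leb d n then 1 else 0.
Proof.
  intros Hd. destruct (Nat.leb d n) eqn:E; [apply cheb_nu_bounds|].
  apply Nat.leb_gt in E. rewrite Nat.div_small, cheb_nu_0 by lia. lra.
Qed.

Definition cheb_comb (n : nat) : R :=
  ln_fact n - ln_fact (n / 2) - ln_fact (n / 3) - ln_fact (n / 5) + ln_fact (n / 30).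

Lemma cheb_comb_legendre n : cheb_comb n =
  sumR (fun q => if primeb q
                 then ln (INR q) * sumR (fun k => cheb_nu (n / q ^ S k)) n else 0) (S n).
Proof.
  unfold cheb_comb.
  rewrite !(fun m => NatPrime.ln_fact_legendre m (S n) n)
    by (pose proof (div_le_self n 2); pose proof (div_le_self n 3);
        pose proof (div_le_self n 5); pose proof (div_le_self n 30); lia).
  unfold legendre_sum, Rminus. rewrite <- !sumR_opp, <- !sumR_plus.
  apply sumR_ext. intros q _. destruct (primeb q); [|ring].
  rewrite !Ropp_mult_distr_r, <- !Rmult_plus_distr_l. f_equal.
  rewrite <- !sumR_opp, <- !sumR_plus. apply sumR_ext. intros k _. unfold cheb_nu.
  rewrite !(div_div_comm n _ (q ^ S k)). ring.
Qed.

(* Every prime in [(n/6, n]] contributes [ln q] to [cheb_comb n], since [nu(n/q) = 1]. *)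
Lemma theta_sub_div6_le_cheb_comb n : theta n - theta (n / 6) <= cheb_comb n.
Proof.
  unfold theta. rewrite (sumR_trunc_leb _ (n / 6) n) by apply div_le_self.
  rewrite cheb_comb_legendre. unfold Rminus. rewrite <- sumR_opp, <- sumR_plus.
  apply sumR_le. intros q Hq.
  destruct (primeb q) eqn:E; [|destruct (Nat.leb q (n / 6)); lra].
  pose proof (NatPrime.primeb_ge2 q E) as Hq2. pose proof (ln_INR_nonneg q ltac:(lia)).
  assert (Hnu : 0 <= sumR (fun k => cheb_nu (n / q ^ S k)) n)
    by (apply sumR_nonneg; intros; apply cheb_nu_bounds).
  destruct (Nat.leb q (n / 6)) eqn:E6; [rewrite Rplus_opp_r; apply Rmult_le_pos; auto|].
  apply Nat.leb_gt in E6.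
  assert (Hnq : cheb_nu (n / q ^ 1) = 1).
  { apply cheb_nu_1_5. rewrite Nat.pow_1_r. split; [apply Nat.div_str_pos; lia|].
    assert (n < 6 * q)%nat
      by (pose proof (Nat.div_mod_eq n 6); pose proof (Nat.mod_upper_bound n 6); lia).
    assert (n / q < 6)%nat by (apply Nat.Div0.div_lt_upper_bound; lia). lia. }
  assert (1 <= sumR (fun k => cheb_nu (n / q ^ S k)) n).
  { rewrite <- Hnq. apply (sumR_ge_term (fun k => cheb_nu (n / q ^ S k)) n 0);
      [intros; apply cheb_nu_bounds | lia]. }
  rewrite Ropp_0, Rplus_0_r. nra.
Qed.

Lemma sum_ln_prime_powers_le q n K : (2 <= q)%nat -> (1 <= n)%nat ->
  sumR (fun k => if Nat.leb (q ^ S k) n then ln (INR q) else 0) K <= ln (INR n).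
Proof.
  intros Hq Hn. set (f := fun k => if Nat.leb (q ^ S k) n then ln (INR q) else 0).
  enough (sumR f K <= ln (INR n) /\ ((q ^ K <= n)%nat -> sumR f K = INR K * ln (INR q)))
    by tauto.
  induction K as [|K [IH1 IH2]]; [simpl; split; [apply ln_INR_nonneg | intros; ring]; auto|].
  change (sumR f (S K)) with (sumR f K + f K).
  destruct (Nat.leb (q ^ S K) n) eqn:E.
  2: { replace (f K) with 0 by (unfold f; rewrite E; reflexivity).
       apply Nat.leb_gt in E. split; [lra | lia]. }
  replace (f K) with (ln (INR q)) by (unfold f; rewrite E; reflexivity).
  apply Nat.leb_le in E.
  assert (HK : (q ^ K <= n)%nat) by (simpl in E; nia).
  rewrite (IH2 HK), S_INR.
  assert (Hpow : (INR K + 1) * ln (INR q) = ln (INR (q ^ S K))).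
  { rewrite pow_INR, ln_pow, S_INR by (apply lt_0_INR; lia). ring. }
  split; [|intros; ring].
  replace (INR K * ln (INR q) + ln (INR q)) with ((INR K + 1) * ln (INR q)) by ring.
  rewrite Hpow. apply ln_le; [|apply le_INR; auto].
  apply lt_0_INR. apply Nat.neq_0_lt_0, Nat.pow_nonzero. lia.
Qed.

Lemma sum_cheb_nu_small_prime q n : (2 <= q)%nat -> (1 <= n)%nat ->
  ln (INR q) * sumR (fun k => cheb_nu (n / q ^ S k)) n <= ln (INR n).
Proof.
  intros Hq Hn. eapply Rle_trans; [|apply (sum_ln_prime_powers_le q n n); auto].
  rewrite <- sumR_scal. apply sumR_le. intros k _.
  pose proof (ln_INR_nonneg q ltac:(lia)).
  pose proof (cheb_nu_div_le n (q ^ S k) ltac:(apply Nat.pow_nonzero; lia)).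
  pose proof (cheb_nu_bounds (n / q ^ S k)).
  destruct (Nat.leb _ _); nra.
Qed.

Lemma sum_cheb_nu_large_prime q n : (2 <= q)%nat -> (n < q * q)%nat ->
  sumR (fun k => cheb_nu (n / q ^ S k)) n <= 1.
Proof.
  intros Hq Hn. destruct n as [|n]; [simpl; lra|].
  rewrite sumR_shift, (sumR_ext _ (fun _ => 0)), sumR_zero.
  - pose proof (cheb_nu_bounds (S n / q ^ 1)). lra.
  - intros k _. rewrite Nat.div_small; [apply cheb_nu_0|].
    apply Nat.lt_le_trans with (q * q)%nat; auto.
    change (q ^ S (S k))%nat with (q * (q * q ^ k))%nat. rewrite Nat.mul_assoc.
    rewrite <- (Nat.mul_1_r (q * q)) at 1. apply Nat.mul_le_mono_l.
    apply Nat.neq_0_lt_0, Nat.pow_nonzero. lia.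
Qed.

(* Primes [q <= sqrt n] contribute at most [ln n] each, larger ones at most [ln q]. *)
Lemma cheb_comb_le_theta n : (1 <= n)%nat ->
  cheb_comb n <= theta n + ln (INR n) * (INR (Nat.sqrt n) + 1).
Proof.
  intros Hn. rewrite cheb_comb_legendre. unfold theta.
  pose proof (ln_INR_nonneg n Hn).
  apply Rle_trans with (sumR (fun q => (if primeb q then ln (INR q) else 0)
                          + ln (INR n) * (if Nat.leb q (Nat.sqrt n) then 1 else 0)) (S n)).
  - apply sumR_le. intros q _. destruct (primeb q) eqn:E; [|destruct (Nat.leb _ _); lra].
    pose proof (NatPrime.primeb_ge2 q E) as Hq2. pose proof (ln_INR_nonneg q ltac:(lia)).
    destruct (Nat.leb q (Nat.sqrt n)) eqn:Es.
    + apply Nat.leb_le, Nat.sqrt_le_square in Es.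
      pose proof (sum_cheb_nu_small_prime q n Hq2 Hn). lra.
    + apply Nat.leb_gt in Es.
      assert (Hqq : (n < q * q)%nat).
      { destruct (le_lt_dec (q * q) n) as [h|h]; auto. apply Nat.sqrt_le_square in h. lia. }
      pose proof (sum_cheb_nu_large_prime q n Hq2 Hqq). nra.
  - rewrite sumR_plus, sumR_scal, sumR_count_leb. apply Rplus_le_compat_l.
    apply Rmult_le_compat_l; auto.
    pose proof (Nat.sqrt_le_lin n). rewrite Nat.min_r, S_INR by lia. lra.
Qed.

(* The main term of Stirling's formula: [ln m! = m ln m - m + O(ln m)]. *)
Definition stirling_main (t : R) : R := t * ln t - t.

Lemma ln_fact_bounds m : (1 <= m)%nat ->
  stirling_main (INR m) + 1 <= ln_fact m <= stirling_main (INR m) + 1 + ln (INR m).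
Proof.
  intros Hm. induction Hm as [|m Hm IH].
  - unfold ln_fact, stirling_main. simpl. rewrite ln_1. lra.
  - unfold ln_fact in *. change (sumR ?f (S m)) with (sumR f m + f m).
    unfold stirling_main in *. rewrite S_INR in *.
    assert (Hm0 : 1 <= INR m) by (apply (le_INR 1); auto).
    pose proof (ln_le_sub1 ((INR m + 1) / INR m) ltac:(apply Rdiv_lt_0_compat; lra)) as Hl1.
    pose proof (ln_le_sub1 (INR m / (INR m + 1)) ltac:(apply Rdiv_lt_0_compat; lra)) as Hl2.
    rewrite ln_div in Hl1, Hl2 by lra.
    assert (H1 : INR m * (ln (INR m + 1) - ln (INR m)) <= 1).
    { apply Rmult_le_compat_l with (r := INR m) in Hl1; [|lra].
      replace (INR m * ((INR m + 1) / INR m - 1)) with 1 in Hl1 by (field; lra). lra. }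
    assert (H2 : 1 <= (INR m + 1) * (ln (INR m + 1) - ln (INR m))).
    { apply Rmult_le_compat_l with (r := INR m + 1) in Hl2; [|lra].
      replace ((INR m + 1) * (INR m / (INR m + 1) - 1)) with (-1) in Hl2 by (field; lra). lra. }
    split; nra.
Qed.

Lemma stirling_main_floor (m : nat) (y : R) : (1 <= m)%nat -> INR m <= y < INR m + 1 ->
  stirling_main (INR m) <= stirling_main y /\ stirling_main y - ln y <= stirling_main (INR m).
Proof.
  intros Hm [Hy1 Hy2]. assert (H1 : 1 <= INR m) by (apply (le_INR 1); auto).
  unfold stirling_main.
  pose proof (ln_le_sub1 (y / INR m) ltac:(apply Rdiv_lt_0_compat; lra)) as La.
  pose proof (ln_le_sub1 (INR m / y) ltac:(apply Rdiv_lt_0_compat; lra)) as Lb.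
  rewrite ln_div in La, Lb by lra.
  assert (Ha : INR m * (ln y - ln (INR m)) <= y - INR m).
  { apply Rmult_le_compat_l with (r := INR m) in La; [|lra].
    replace (INR m * (y / INR m - 1)) with (y - INR m) in La by (field; lra). lra. }
  assert (Hb : y * (ln (INR m) - ln y) <= INR m - y).
  { apply Rmult_le_compat_l with (r := y) in Lb; [|lra].
    replace (y * (INR m / y - 1)) with (INR m - y) in Lb by (field; lra). lra. }
  assert (Hlm : 0 <= ln (INR m)) by (apply ln_nonneg; lra).
  assert (Hly : ln (INR m) <= ln y) by (apply ln_le; lra).
  split; nra.
Qed.

(* Chebyshev's constant, about 0.9212. *)
Definition cheb_A : R := ln 2 / 2 + ln 3 / 3 + ln 5 / 5 - ln 30 / 30.

Lemma stirling_main_cheb_comb x : 0 < x ->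
  stirling_main x - stirling_main (x / 2) - stirling_main (x / 3) - stirling_main (x / 5)
  + stirling_main (x / 30) = cheb_A * x.
Proof. intros Hx. unfold stirling_main, cheb_A. rewrite !ln_div by lra. field. Qed.

Lemma ln_fact_div_bounds n j : (30 <= n)%nat -> (0 < j <= 30)%nat ->
  stirling_main (INR n / INR j) - ln (INR n) + 1 <= ln_fact (n / j)
  <= stirling_main (INR n / INR j) + 1 + ln (INR n).
Proof.
  intros Hn Hj. assert (Hm : (1 <= n / j)%nat) by (apply Nat.div_le_lower_bound; lia).
  pose proof (INR_div_bounds n j ltac:(lia)) as Hfl.
  pose proof (stirling_main_floor (n / j) (INR n / INR j) Hm Hfl) as [G1 G2].
  pose proof (ln_fact_bounds (n / j) Hm) as [L1 L2].
  assert (Hpos : 0 < INR (n / j)) by (apply lt_0_INR; lia).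
  assert (Hy : INR n / INR j <= INR n).
  { assert (1 <= INR j) by (apply (le_INR 1); lia). pose proof (pos_INR n).
    unfold Rdiv. rewrite <- (Rmult_1_r (INR n)) at 2. apply Rmult_le_compat_l; auto.
    rewrite <- Rinv_1. apply Rinv_le_contravar; lra. }
  assert (ln (INR n / INR j) <= ln (INR n)) by (apply ln_le; lra).
  assert (ln (INR (n / j)) <= ln (INR n)) by (apply ln_le; [lra | apply le_INR, div_le_self]).
  split; lra.
Qed.

Lemma cheb_comb_bounds n : (30 <= n)%nat ->
  cheb_A * INR n - 4 * ln (INR n) - 1 <= cheb_comb n <= cheb_A * INR n + 5 * ln (INR n).
Proof.
  intros Hn. pose proof (ln_fact_bounds n ltac:(lia)).
  pose proof (ln_fact_div_bounds n 2 Hn ltac:(lia)).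
  pose proof (ln_fact_div_bounds n 3 Hn ltac:(lia)).
  pose proof (ln_fact_div_bounds n 5 Hn ltac:(lia)).
  pose proof (ln_fact_div_bounds n 30 Hn ltac:(lia)).
  pose proof (stirling_main_cheb_comb (INR n) ltac:(apply lt_0_INR; lia)).
  replace (INR 2) with 2 in * by (simpl; ring). replace (INR 3) with 3 in * by (simpl; ring).
  replace (INR 5) with 5 in * by (simpl; ring). replace (INR 30) with 30 in * by (simpl; ring).
  unfold cheb_comb. split; lra.
Qed.

Lemma cheb_A_bounds : 23 / 30 <= cheb_A <= 2.
Proof.
  assert (L2 : 0 < ln 2) by (rewrite <- ln_1; apply ln_increasing; lra).
  assert (L3 : 1 <= ln 3) by (apply ln_ge1; lra).
  assert (L5 : 1 <= ln 5) by (apply ln_ge1; lra).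
  assert (E30 : ln 30 = ln 2 + ln 3 + ln 5).
  { replace 30 with (2 * 3 * 5) by ring. rewrite !ln_mult by lra. ring. }
  assert (Hk : 14 * ln 3 <= 14 * ln 2 + 5 * ln 5).
  { replace (14 * ln 2) with (ln (2 ^ 14)) by (rewrite ln_pow; [simpl; ring | lra]).
    replace (5 * ln 5) with (ln (5 ^ 5)) by (rewrite ln_pow; [simpl; ring | lra]).
    replace (14 * ln 3) with (ln (3 ^ 14)) by (rewrite ln_pow; [simpl; ring | lra]).
    rewrite <- ln_mult by (apply pow_lt; lra).
    apply ln_le; [apply pow_lt; lra | simpl; lra]. }
  pose proof (ln_le_sub1 2). pose proof (ln_le_sub1 3). pose proof (ln_le_sub1 5).
  unfold cheb_A. rewrite E30. split; lra.
Qed.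

Lemma theta_lt30 n : (n < 30)%nat -> theta n <= 900.
Proof.
  intros Hn. unfold theta. apply Rle_trans with (sumR (fun _ => 29) (S n)).
  - apply sumR_le. intros q Hq. destruct (primeb q) eqn:E; [|lra].
    pose proof (NatPrime.primeb_ge2 q E).
    pose proof (ln_le_sub1 (INR q) ltac:(apply lt_0_INR; lia)).
    assert (INR q <= 29) by (replace 29 with (INR 29) by (simpl; ring); apply le_INR; lia). lra.
  - rewrite sumR_const.
    assert (INR (S n) <= 30) by (replace 30 with (INR 30) by (simpl; ring); apply le_INR; lia).
    lra.
Qed.

(* [theta n - theta (n/6) <= cheb_comb n] iterated along [n, n/6, n/36, ...]. *)
Lemma theta_upper n : (1 <= n)%nat ->
  theta n <= 6 / 5 * cheb_A * INR n + 5 * (ln (INR n) + 1) ^ 2 + 900.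
Proof.
  induction n as [n IH] using (well_founded_induction lt_wf). intros Hn.
  pose proof cheb_A_bounds as [HA1 HA2].
  assert (Hln : 0 <= ln (INR n)) by (apply ln_INR_nonneg; auto).
  pose proof (pos_INR n).
  destruct (lt_dec n 30) as [Hs|Hb].
  - pose proof (theta_lt30 n Hs).
    assert (0 <= 6 / 5 * cheb_A * INR n) by (apply Rmult_le_pos; lra). nra.
  - pose proof (theta_sub_div6_le_cheb_comb n).
    pose proof (cheb_comb_bounds n ltac:(lia)) as [_ Hcomb].
    assert (Hm : (1 <= n / 6)%nat) by (apply Nat.div_le_lower_bound; lia).
    pose proof (IH (n / 6)%nat (Nat.div_lt n 6 ltac:(lia) ltac:(lia)) Hm).
    pose proof (INR_div_bounds n 6 ltac:(lia)) as [Hfl _].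
    replace (INR 6) with 6 in Hfl by (simpl; ring).
    assert (Hm0 : 0 < INR (n / 6)) by (apply lt_0_INR; lia).
    assert (Lm : ln (INR (n / 6)) <= ln (INR n) - 1).
    { apply Rle_trans with (ln (INR n / 6)); [apply ln_le; lra|].
      rewrite ln_div by lra. pose proof (ln_ge1 6 ltac:(lra)). lra. }
    assert (Lm0 : 0 <= ln (INR (n / 6))) by (apply ln_INR_nonneg; auto).
    assert (Sq : (ln (INR (n / 6)) + 1) ^ 2 <= ln (INR n) ^ 2) by (apply pow_incr; lra).
    assert (6 / 5 * cheb_A * INR (n / 6) <= 6 / 5 * cheb_A * (INR n / 6))
      by (apply Rmult_le_compat_l; nra).
    simpl in Sq |- *. nra.
Qed.

Lemma theta_lower n : (30 <= n)%nat ->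
  cheb_A * INR n - 4 * ln (INR n) - 1 - ln (INR n) * (sqrt (INR n) + 1) <= theta n.
Proof.
  intros Hn. pose proof (cheb_comb_le_theta n ltac:(lia)).
  pose proof (cheb_comb_bounds n Hn) as [Hcomb _].
  assert (INR (Nat.sqrt n) <= sqrt (INR n)).
  { rewrite <- (sqrt_square (INR (Nat.sqrt n))) by apply pos_INR. apply sqrt_le_1_alt.
    rewrite <- mult_INR. apply le_INR, Nat.sqrt_le_square. lia. }
  assert (0 <= ln (INR n)) by (apply ln_INR_nonneg; lia).
  assert (ln (INR n) * (INR (Nat.sqrt n) + 1) <= ln (INR n) * (sqrt (INR n) + 1))
    by (apply Rmult_le_compat_l; lra).
  lra.
Qed.

(* Both error terms are [O(n^(3/4))], via [ln n <= 4 n^(1/4)]. *)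
Lemma theta_error_terms_small eps : 0 < eps -> exists n0 : nat, forall n, (n0 <= n)%nat ->
  ln (INR n) * (sqrt (INR n) + 5) + 1 <= eps * INR n /\
  5 * (ln (INR n) + 1) ^ 2 + 900 <= eps * INR n.
Proof.
  intros He. set (T := 1 + 1025 / eps).
  assert (HT : 1 <= T /\ 1025 <= eps * T).
  { assert (0 < 1025 / eps) by (apply Rdiv_lt_0_compat; lra).
    unfold T. split; [lra|]. field_simplify; lra. }
  destruct (INR_eventually_ge (T ^ 4)) as [n0 Hn0]. exists (Nat.max n0 1). intros n Hn.
  assert (Hn1 : 1 <= INR n) by (apply (le_INR 1); lia).
  specialize (Hn0 n ltac:(lia)).
  set (t := sqrt (sqrt (INR n))).
  assert (Hs : 0 <= sqrt (INR n)) by apply sqrt_pos.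
  assert (Ht2 : t * t = sqrt (INR n)) by (apply sqrt_sqrt; auto).
  assert (Hs2 : sqrt (INR n) * sqrt (INR n) = INR n) by (apply sqrt_sqrt; lra).
  assert (Ht4 : INR n = t * t * (t * t)) by nra.
  assert (Htpos : 0 < t) by (apply sqrt_lt_R0, sqrt_lt_R0; lra).
  assert (HtT : T <= t).
  { destruct (Rle_lt_dec T t) as [h|h]; auto.
    assert (t * t < T * T) by nra. simpl in Hn0. nra. }
  assert (Hln : ln (INR n) <= 4 * t).
  { assert (Hsp : 0 < sqrt (INR n)) by (apply sqrt_lt_R0; lra).
    pose proof (ln_le_2sqrt (sqrt (INR n)) Hsp).
    rewrite <- Hs2, ln_mult by auto. unfold t. lra. }
  assert (Hl0 : 0 <= ln (INR n)) by (apply ln_nonneg; lra).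
  assert (Heps1 : 1025 <= eps * t) by (pose proof (Rmult_le_compat_l eps T t ltac:(lra) HtT); lra).
  split.
  - assert (ln (INR n) * (sqrt (INR n) + 5) <= 4 * t * (t * t + 5))
      by (rewrite <- Ht2; apply Rmult_le_compat; nra).
    assert (25 * (t * t * t) <= eps * t * (t * t * t)) by (apply Rmult_le_compat_r; nra).
    nra.
  - assert ((ln (INR n) + 1) ^ 2 <= (4 * t + 1) ^ 2) by (apply pow_incr; lra).
    assert (1025 <= eps * t * t)
      by (pose proof (Rmult_le_compat_l (eps * t) 1 t ltac:(nra) ltac:(nra)); lra).
    assert (1025 * (t * t) <= eps * t * t * (t * t)) by (apply Rmult_le_compat_r; nra).
    simpl in *. nra.
Qed.

Lemma theta_asymptotic_bounds eps : 0 < eps -> exists n0 : nat, forall n, (n0 <= n)%nat ->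
  (cheb_A - eps) * INR n <= theta n <= (6 / 5 * cheb_A + eps) * INR n.
Proof.
  intros He. destruct (theta_error_terms_small eps He) as [n0 H].
  exists (Nat.max n0 30). intros n Hn. destruct (H n ltac:(lia)).
  pose proof (theta_lower n ltac:(lia)). pose proof (theta_upper n ltac:(lia)).
  split; nra.
Qed.

(** * The sum of [p^-2] over large primes *)

Lemma sumR_by_parts (u w : nat -> R) d : u 0%nat = 0 ->
  sumR (fun n => (u (S n) - u n) * w (S n)) d
  = u d * w d + sumR (fun n => u n * (w n - w (S n))) d.
Proof. intros H0. induction d; simpl sumR; [simpl; rewrite H0; ring | rewrite IHd; ring]. Qed.

Lemma sumR_if_false (P : nat -> bool) f B : (forall n, (n < B)%nat -> P n = false) ->
  sumR (fun n => if P n then f n else 0) B = 0.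
Proof.
  intros H. transitivity (sumR (fun _ => 0) B); [|apply sumR_zero].
  apply sumR_ext. intros i Hi. rewrite H; auto.
Qed.

Definition inv_sq (n : nat) : R := / (INR n * INR n).

Lemma sumR_inv_sq_diff_from y0 B : (1 <= y0 <= B)%nat ->
  sumR (fun n => if Nat.leb y0 n then inv_sq n - inv_sq (S n) else 0) B = inv_sq y0 - inv_sq B.
Proof.
  intros [H1 H2]. induction H2 as [|m H2 IH].
  - rewrite sumR_if_false; [ring|]. intros n Hn. apply Nat.leb_gt; lia.
  - simpl sumR. rewrite IH. replace (Nat.leb y0 m) with true by (symmetry; apply Nat.leb_le; lia).
    ring.
Qed.

(* [t (1/t^2 - 1/(t+1)^2) - 2 (1/(t+1) - 1/(t+2)) = (3t+2) / (t (t+1)^2 (t+2))]. *)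
Lemma inv_sq_diff_weighted_ge (B : nat) : (1 <= B)%nat ->
  2 * (/ (INR B + 1) - / (INR B + 2)) <= INR B * (inv_sq B - inv_sq (S B)).
Proof.
  intros HB. unfold inv_sq. rewrite S_INR. assert (Ht : 1 <= INR B) by (apply (le_INR 1); auto).
  set (t := INR B) in *.
  assert (E : t * (/ (t * t) - / ((t + 1) * (t + 1))) - 2 * (/ (t + 1) - / (t + 2))
              = (3 * t + 2) / (t * ((t + 1) * (t + 1)) * (t + 2))) by (field; lra).
  assert (0 <= (3 * t + 2) / (t * ((t + 1) * (t + 1)) * (t + 2)))
    by (apply Rle_mult_inv_pos; [lra | apply Rmult_lt_0_compat; [apply Rmult_lt_0_compat|]; nra]).
  lra.
Qed.

Lemma sumR_weighted_inv_sq_diff_ge y0 B : (1 <= y0 <= B)%nat ->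
  2 * (/ (INR y0 + 1) - / (INR B + 1))
  <= sumR (fun n => if Nat.leb y0 n then INR n * (inv_sq n - inv_sq (S n)) else 0) B.
Proof.
  intros [H1 H2]. induction H2 as [|m H2 IH].
  - rewrite sumR_if_false; [lra|]. intros n Hn. apply Nat.leb_gt; lia.
  - simpl sumR. replace (Nat.leb y0 m) with true by (symmetry; apply Nat.leb_le; lia).
    pose proof (inv_sq_diff_weighted_ge m ltac:(lia)). rewrite S_INR.
    replace (INR m + 1 + 1) with (INR m + 2) by ring. lra.
Qed.

Definition prime_ln_inv_sq_tail (a B : nat) : R :=
  sumR (fun n => if Nat.ltb a (S n)
                 then (if primeb (S n) then ln (INR (S n)) else 0) * inv_sq (S n) else 0) B.

Definition prime_inv_sq_tail (x : R) (B : nat) : R :=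
  sumR (fun n => if Rle_dec x (INR (S n))
                 then (if primeb (S n) then inv_sq (S n) else 0) else 0) B.

Lemma inv_sq_nonneg n : 0 <= inv_sq n.
Proof.
  unfold inv_sq. destruct (Nat.eq_dec n 0) as [->|Hn].
  - simpl. rewrite Rmult_0_l, Rinv_0. lra.
  - left. apply Rinv_0_lt_compat, Rmult_lt_0_compat; apply lt_0_INR; lia.
Qed.

Lemma inv_sq_sub_S_nonneg n : (1 <= n)%nat -> 0 <= inv_sq n - inv_sq (S n).
Proof.
  intros Hn. unfold inv_sq. rewrite S_INR. assert (1 <= INR n) by (apply (le_INR 1); auto).
  assert (/ ((INR n + 1) * (INR n + 1)) <= / (INR n * INR n)) by (apply Rinv_le_contravar; nra).
  lra.
Qed.

Lemma prime_ln_inv_sq_tail_by_parts a B :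
  let u := fun n => theta (Nat.max n a) - theta a in
  prime_ln_inv_sq_tail a B = u B * inv_sq B + sumR (fun n => u n * (inv_sq n - inv_sq (S n))) B.
Proof.
  intros u. rewrite <- sumR_by_parts by (unfold u; rewrite Nat.max_r by lia; ring).
  apply sumR_ext. intros n Hn. unfold u.
  destruct (Nat.ltb a (S n)) eqn:E.
  - apply Nat.ltb_lt in E. rewrite (Nat.max_l (S n)), theta_S by lia.
    destruct (Nat.eq_dec n a) as [->|]; [rewrite Nat.max_r | rewrite Nat.max_l]; (ring || lia).
  - apply Nat.ltb_ge in E. rewrite !Nat.max_r by lia. ring.
Qed.

(* Partial summation, with [theta n - theta a] as the summatory function. *)
Lemma prime_ln_inv_sq_tail_ge (a B y0 : nat) (al be : R) :
  (1 <= y0 <= B)%nat -> (a <= y0)%nat -> 0 <= al -> 0 <= be ->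
  (forall n, (y0 <= n)%nat -> al * INR n - be <= theta n - theta a) ->
  2 * al * (/ (INR y0 + 1) - / (INR B + 1)) - be * inv_sq y0 <= prime_ln_inv_sq_tail a B.
Proof.
  intros HyB Ha Hal Hbe Hth.
  rewrite prime_ln_inv_sq_tail_by_parts. set (u := fun n => theta (Nat.max n a) - theta a).
  change (2 * al * (/ (INR y0 + 1) - / (INR B + 1)) - be * inv_sq y0
          <= u B * inv_sq B + sumR (fun n => u n * (inv_sq n - inv_sq (S n))) B).
  assert (Hu : forall n, 0 <= u n)
    by (intros; unfold u; pose proof (theta_le a (Nat.max n a) ltac:(lia)); lra).
  assert (HuB : 0 <= u B * inv_sq B) by (apply Rmult_le_pos; auto using inv_sq_nonneg).
  set (D := fun n => inv_sq n - inv_sq (S n)).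
  assert (Hmain : sumR (fun n => if Nat.leb y0 n then (al * INR n - be) * D n else 0) B
                  <= sumR (fun n => u n * D n) B).
  { apply sumR_le. intros n Hn. unfold D. destruct (Nat.leb y0 n) eqn:E1.
    - apply Nat.leb_le in E1. apply Rmult_le_compat_r; [apply inv_sq_sub_S_nonneg; lia|].
      unfold u. rewrite Nat.max_l by lia. auto.
    - destruct n; [unfold u; rewrite Nat.max_r by lia; lra|].
      apply Rmult_le_pos; auto. apply inv_sq_sub_S_nonneg; lia. }
  assert (Hsplit : sumR (fun n => if Nat.leb y0 n then (al * INR n - be) * D n else 0) B =
     al * sumR (fun n => if Nat.leb y0 n then INR n * D n else 0) B
     - be * sumR (fun n => if Nat.leb y0 n then D n else 0) B).
  { unfold Rminus. rewrite <- sumR_scal, Ropp_mult_distr_l, <- sumR_scal, <- sumR_plus.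
    apply sumR_ext. intros. destruct (Nat.leb y0 i); ring. }
  unfold D in *. cbv beta in *. rewrite sumR_inv_sq_diff_from in Hsplit by auto.
  pose proof (sumR_weighted_inv_sq_diff_ge y0 B HyB).
  pose proof (inv_sq_nonneg B).
  assert (0 <= be * inv_sq B) by (apply Rmult_le_pos; auto).
  assert (al * (2 * (/ (INR y0 + 1) - / (INR B + 1)))
          <= al * sumR (fun n => if Nat.leb y0 n then INR n * (inv_sq n - inv_sq (S n)) else 0) B)
    by (apply Rmult_le_compat_l; auto).
  lra.
Qed.

Lemma prime_ln_inv_sq_tail_le (a B : nat) (x : R) : INR a <= x < INR a + 1 -> (1 <= B)%nat ->
  prime_ln_inv_sq_tail a B <= ln (INR B) * prime_inv_sq_tail x B.
Proof.
  intros [Ha1 Ha2] HB. unfold prime_ln_inv_sq_tail, prime_inv_sq_tail.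
  rewrite <- sumR_scal. apply sumR_le. intros n Hn.
  pose proof (inv_sq_nonneg (S n)).
  assert (HlB : 0 <= ln (INR B)) by (apply ln_INR_nonneg; lia).
  destruct (Nat.ltb a (S n)) eqn:E.
  - apply Nat.ltb_lt in E. assert (Hx : x <= INR (S n)).
    { assert (INR a + 1 <= INR (S n)) by (rewrite <- S_INR; apply le_INR; lia). lra. }
    destruct (Rle_dec x (INR (S n))); [|contradiction].
    destruct (primeb (S n)); [|lra].
    assert (ln (INR (S n)) <= ln (INR B)) by (apply ln_le; [apply lt_0_INR | apply le_INR]; lia).
    apply Rmult_le_compat_r; auto.
  - destruct (Rle_dec x (INR (S n))); [|lra]. destruct (primeb (S n)); [|lra].
    apply Rmult_le_pos; auto.
Qed.

Lemma floor_INR_exists x : 0 <= x -> exists a : nat, INR a <= x < INR a + 1.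
Proof.
  intros Hx. destruct (archimed x) as [H1 H2].
  exists (Z.to_nat (up x - 1)).
  assert (Hup : (0 <= up x - 1)%Z).
  { assert (IZR 0 < IZR (up x)) by lra. apply lt_IZR in H. lia. }
  rewrite INR_IZR_INZ, Z2Nat.id by auto. rewrite minus_IZR. simpl. lra.
Qed.

Lemma tail_lower_numeric A x : 23 / 30 <= A <= 2 -> 500 <= x ->
  3 / 5 / x <= 2 * (99 / 100 * A) * (/ (121 / 99 * x + 2) - / (1000 * x))
               - 121 / 100 * A * x * / (121 / 99 * x * (121 / 99 * x)).
Proof.
  intros HA Hx.
  replace (2 * (99 / 100 * A) * (/ (121 / 99 * x + 2) - / (1000 * x))
           - 121 / 100 * A * x * / (121 / 99 * x * (121 / 99 * x)))
    with ((198 / 100 * A * (1000 * x) - 198 / 100 * A * (121 / 99 * x + 2))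
          / ((121 / 99 * x + 2) * (1000 * x)) - 81 / 100 * A / x) by (field; lra).
  assert (K : (3 / 5 + 81 / 100 * A) / x
              <= (198 / 100 * A * (1000 * x) - 198 / 100 * A * (121 / 99 * x + 2))
                 / ((121 / 99 * x + 2) * (1000 * x))).
  { apply Rmult_le_reg_r with (x * ((121 / 99 * x + 2) * (1000 * x))); [nra|].
    unfold Rdiv. field_simplify; [nra | lra | lra]. }
  replace (3 / 5 / x) with ((3 / 5 + 81 / 100 * A) / x - 81 / 100 * A / x) by (field; lra).
  lra.
Qed.

(* Apply the previous lemma with [eps = A/100], [a = floor x], [y0 ~ 121/99 x] (where
   the lower bound for [theta y0] beats the upper bound for [theta a]) and [B ~ 1000 x]. *)
Lemma prime_ln_inv_sq_tail_large : exists X0, 500 <= X0 /\ forall x, X0 <= x ->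
  exists a B : nat, INR a <= x < INR a + 1 /\ (1 <= B)%nat /\ INR B <= 1000 * x /\
    3 / 5 / x <= prime_ln_inv_sq_tail a B.
Proof.
  pose proof cheb_A_bounds as [HA1 HA2]. set (A := cheb_A) in *.
  destruct (theta_asymptotic_bounds (A / 100) ltac:(lra)) as [n0 Hn0].
  change cheb_A with A in Hn0.
  exists (Rmax (INR n0 + 1) 500). split; [apply Rmax_r|]. intros x Hx.
  pose proof (Rmax_l (INR n0 + 1) 500). pose proof (Rmax_r (INR n0 + 1) 500).
  set (c := 121 / 99).
  destruct (floor_INR_exists x ltac:(lra)) as [a [Ha1 Ha2]].
  destruct (floor_INR_exists (c * x) ltac:(unfold c; lra)) as [y1 [Hy1 Hy2]].
  destruct (floor_INR_exists (1000 * x) ltac:(lra)) as [B [HB1 HB2]].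
  set (y0 := S y1).
  assert (Hy0 : c * x <= INR y0 <= c * x + 1) by (unfold y0; rewrite S_INR; lra).
  assert (Han0 : (n0 <= a)%nat)
    by (destruct (le_lt_dec n0 a); auto; apply le_INR in l; rewrite S_INR in l; lra).
  assert (Hay0 : (a <= y0)%nat)
    by (destruct (le_lt_dec a y0); auto; apply lt_INR in l; unfold c in Hy0; lra).
  assert (Hy0B : (y0 <= B)%nat)
    by (destruct (le_lt_dec y0 B); auto;
        apply le_INR in l; rewrite S_INR in l; unfold c in Hy0; lra).
  exists a, B. split; [lra|]. split; [lia|]. split; [lra|].
  set (al := 99 / 100 * A). set (be := 121 / 100 * A * x).
  assert (Hth : forall n, (y0 <= n)%nat -> al * INR n - be <= theta n - theta a).
  { intros n Hn. destruct (Hn0 n ltac:(lia)) as [T _]. destruct (Hn0 a Han0) as [_ Ta].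
    assert ((6 / 5 * A + A / 100) * INR a <= (6 / 5 * A + A / 100) * x)
      by (apply Rmult_le_compat_l; lra).
    unfold al, be. lra. }
  pose proof (prime_ln_inv_sq_tail_ge a B y0 al be ltac:(unfold y0; lia) Hay0
                ltac:(unfold al; lra) ltac:(unfold be; nra) Hth).
  assert (I1 : / (c * x + 2) <= / (INR y0 + 1)) by (apply Rinv_le_contravar; unfold c in *; lra).
  assert (I2 : / (INR B + 1) <= / (1000 * x)) by (apply Rinv_le_contravar; lra).
  assert (I3 : inv_sq y0 <= / (c * x * (c * x))).
  { unfold inv_sq. apply Rinv_le_contravar; unfold c in *; [nra | apply Rmult_le_compat; lra]. }
  assert (2 * al * / (c * x + 2) <= 2 * al * / (INR y0 + 1))
    by (apply Rmult_le_compat_l; unfold al; lra).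
  assert (2 * al * / (INR B + 1) <= 2 * al * / (1000 * x))
    by (apply Rmult_le_compat_l; unfold al; lra).
  assert (be * inv_sq y0 <= be * / (c * x * (c * x))) by (apply Rmult_le_compat_l; unfold be; nra).
  pose proof (tail_lower_numeric A x ltac:(lra) ltac:(lra)).
  unfold al, be, c in *. lra.
Qed.

Lemma prime_inv_sq_tail_ge : exists X0, 0 < X0 /\ forall x, X0 <= x ->
  exists B : nat, 11 / 20 / (x * ln x) <= prime_inv_sq_tail x B.
Proof.
  destruct prime_ln_inv_sq_tail_large as [X0 [HX0 Hlarge]].
  exists (Rmax X0 (1000 ^ 11)). split; [pose proof (Rmax_l X0 (1000 ^ 11)); lra|].
  intros x Hx. pose proof (Rmax_l X0 (1000 ^ 11)). pose proof (Rmax_r X0 (1000 ^ 11)).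
  destruct (Hlarge x ltac:(lra)) as (a & B & Ha & HB1 & HB & Htail).
  exists B. pose proof (prime_ln_inv_sq_tail_le a B x Ha HB1) as Hle.
  assert (HBpos : 0 < INR B) by (apply lt_0_INR; lia).
  assert (L1000 : 0 < ln 1000) by (rewrite <- ln_1; apply ln_increasing; lra).
  assert (LB : ln (INR B) <= ln x + ln 1000) by (rewrite <- ln_mult by lra; apply ln_le; lra).
  assert (Lx : 11 * ln 1000 <= ln x).
  { replace (11 * ln 1000) with (ln (1000 ^ 11)) by (rewrite ln_pow; [simpl; ring | lra]).
    apply ln_le; [apply pow_lt|]; lra. }
  set (tail := prime_inv_sq_tail x B) in *.
  assert (Htail0 : 0 <= tail).
  { unfold tail, prime_inv_sq_tail. apply sumR_nonneg. intros n _.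
    destruct (Rle_dec x (INR (S n))); [destruct (primeb (S n))|]; try lra. apply inv_sq_nonneg. }
  assert (Hx0 : 0 < x) by lra.
  assert (ln (INR B) * tail <= 12 / 11 * ln x * tail) by (apply Rmult_le_compat_r; lra).
  assert (H35 : 3 / 5 <= x * (12 / 11 * ln x * tail)).
  { apply Rmult_le_reg_l with (/ x); [apply Rinv_0_lt_compat; lra|].
    rewrite <- Rmult_assoc, Rinv_l, Rmult_1_l by lra. unfold Rdiv in Htail. lra. }
  apply Rmult_le_reg_r with (x * ln x); [nra|].
  replace (11 / 20 / (x * ln x) * (x * ln x)) with (11 / 20) by (field; nra).
  nra.
Qed.

(** * The scale [phi_N] *)

Definition phi_integrand (N : nat) (x : R) : R := INR N ^ 2 / (2 * x ^ 2 * ln x).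

Module PhiIntegral.
Import Coquelicot.Coquelicot.

Section Bounds.
Variables (N : nat) (v : R).
Hypothesis v_gt1 : 1 < v.
Hypothesis integrable : ex_RInt (phi_integrand N) v (2 * v).

(* On [v, 2v] the integrand is at most [N^2 / (2 x^2 ln v)], whose primitive is
   [- N^2 / (2 x ln v)]. *)
Lemma RInt_phi_integrand_le : RInt (phi_integrand N) v (2 * v) <= INR N ^ 2 / (4 * v * ln v).
Proof.
  assert (Hlv : 0 < ln v) by (rewrite <- ln_1; apply ln_increasing; lra).
  assert (HN : 0 <= INR N ^ 2) by (apply pow_le, pos_INR).
  set (K := INR N ^ 2 / (2 * ln v)).
  set (F := fun x => - K / x).
  assert (HI : is_RInt (fun x => K / x ^ 2) v (2 * v) (minus (F (2 * v)) (F v))).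
  { apply (@is_RInt_derive R_CompleteNormedModule F (fun x => K / x ^ 2));
      intros x Hx; rewrite Rmin_left, Rmax_right in Hx by lra; unfold F.
    - auto_derive; [lra | field; lra].
    - apply (@ex_derive_continuous R_AbsRing R_NormedModule). auto_derive.
      apply Rmult_integral_contrapositive_currified; [lra|]. rewrite Rmult_1_r; lra. }
  assert (Hle : RInt (phi_integrand N) v (2 * v) <= RInt (fun x => K / x ^ 2) v (2 * v)).
  { apply RInt_le; [lra | auto | eexists; eauto |].
    intros x Hx. unfold phi_integrand, K.
    assert (ln v <= ln x) by (left; apply ln_increasing; lra).
    assert (0 < x ^ 2) by (apply pow_lt; lra).
    apply Rle_trans with (INR N ^ 2 / (2 * x ^ 2 * ln v)); [|right; field; lra].
    unfold Rdiv. apply Rmult_le_compat_l; auto.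
    apply Rinv_le_contravar; [apply Rmult_lt_0_compat |apply Rmult_le_compat_l]; lra. }
  rewrite (is_RInt_unique _ _ _ _ HI) in Hle. unfold minus, plus, opp, F, K in Hle. simpl in Hle.
  apply Rle_trans with (1 := Hle). right. field. lra.
Qed.

Lemma RInt_phi_integrand_ge : INR N ^ 2 / (8 * v * ln (2 * v)) <= RInt (phi_integrand N) v (2 * v).
Proof.
  assert (HN : 0 <= INR N ^ 2) by (apply pow_le, pos_INR).
  set (K := INR N ^ 2 / (8 * v ^ 2 * ln (2 * v))).
  assert (Hl2 : 0 < ln (2 * v)) by (rewrite <- ln_1; apply ln_increasing; lra).
  assert (Hle : RInt (fun _ => K) v (2 * v) <= RInt (phi_integrand N) v (2 * v)).
  { apply RInt_le; [lra | apply ex_RInt_const | auto |].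
    intros x Hx. unfold phi_integrand, K.
    assert (ln x <= ln (2 * v)) by (left; apply ln_increasing; lra).
    assert (0 < ln x) by (rewrite <- ln_1; apply ln_increasing; lra).
    assert (x ^ 2 <= 4 * v ^ 2) by (simpl; nra).
    assert (0 < x ^ 2) by (apply pow_lt; lra).
    unfold Rdiv. apply Rmult_le_compat_l; auto.
    apply Rinv_le_contravar; [apply Rmult_lt_0_compat; lra|].
    replace (8 * v ^ 2 * ln (2 * v)) with (2 * (4 * v ^ 2) * ln (2 * v)) by ring.
    apply Rmult_le_compat; nra. }
  rewrite RInt_const in Hle. unfold scal in Hle. simpl in Hle. unfold mult in Hle. simpl in Hle.
  apply Rle_trans with (2 := Hle). unfold K. right. field. lra.
Qed.

End Bounds.

Lemma is_phi_bounds delta N v : is_phi delta N v ->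
  delta <= INR N ^ 2 / (4 * v * ln v) /\ INR N ^ 2 / (8 * v * ln (2 * v)) <= delta.
Proof.
  intros [Hv [pr Hpr]]. rewrite <- Hpr, <- (RInt_Reals _ _ _ pr).
  assert (Hex : ex_RInt (phi_integrand N) v (2 * v)) by (apply ex_RInt_Reals_1; exact pr).
  split; [apply RInt_phi_integrand_le | apply RInt_phi_integrand_ge]; auto.
Qed.

End PhiIntegral.

(* From [N^2 <= 8 delta phi_N ln (2 phi_N)] and [ln y <= 2 sqrt y]:
   if [phi_N < T N] then [N <= 512 T^3 delta^2]. *)
Lemma is_phi_ge_mul delta T : 0 < delta -> 1 <= T -> exists N0 : nat,
  forall N v, (N0 <= N)%nat -> is_phi delta N v -> T * INR N <= v.
Proof.
  intros Hd HT. destruct (INR_eventually_ge (512 * T ^ 3 * delta ^ 2 + 1)) as [n0 Hn0].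
  exists (Nat.max n0 1). intros N v HN Hphi.
  specialize (Hn0 N ltac:(lia)). assert (HN1 : 1 <= INR N) by (apply (le_INR 1); lia).
  destruct (Rle_dec (T * INR N) v) as [h|h]; auto. exfalso. apply Rnot_le_lt in h.
  pose proof (PhiIntegral.is_phi_bounds delta N v Hphi) as [_ Hlow].
  destruct Hphi as [Hv _].
  assert (Hl2v : 0 < ln (2 * v)) by (rewrite <- ln_1; apply ln_increasing; lra).
  assert (E1 : INR N ^ 2 <= delta * (8 * v * ln (2 * v))).
  { apply Rmult_le_compat_r with (r := 8 * v * ln (2 * v)) in Hlow; [|nra].
    replace (INR N ^ 2 / (8 * v * ln (2 * v)) * (8 * v * ln (2 * v))) with (INR N ^ 2)
      in Hlow by (field; lra).
    lra. }
  set (s := sqrt (2 * T * INR N)).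
  assert (Hs0 : 0 < s) by (apply sqrt_lt_R0; nra).
  assert (Hs2 : s * s = 2 * T * INR N) by (apply sqrt_sqrt; nra).
  assert (E2 : ln (2 * v) <= 2 * s)
    by (apply Rle_trans with (ln (2 * T * INR N)); [apply ln_le | apply ln_le_2sqrt]; nra).
  assert (E3 : v * ln (2 * v) <= T * INR N * (2 * s)) by (apply Rmult_le_compat; lra).
  assert (E4 : INR N <= 16 * delta * T * s) by (simpl in E1; nra).
  assert (E5 : INR N * INR N <= 256 * delta ^ 2 * T ^ 2 * (s * s)).
  { assert (0 <= 16 * delta * T * s) by nra. simpl. nra. }
  rewrite Hs2 in E5. assert (INR N <= 512 * T ^ 3 * delta ^ 2) by (simpl in *; nra).
  lra.
Qed.

Section PrimeEnumeration.
Variable p : nat -> nat.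
Hypothesis p_lt_S : forall i, (p i < p (S i))%nat.
Hypothesis p_primes : forall n : nat, prime (Z.of_nat n) <-> exists i, p i = n.

Lemma p_lt i j : (i < j)%nat -> (p i < p j)%nat.
Proof. intros H. induction H; [apply p_lt_S | specialize (p_lt_S m); lia]. Qed.

Lemma p_lt_inv i j : (p i < p j)%nat -> (i < j)%nat.
Proof.
  intros H. destruct (lt_eq_lt_dec i j) as [[h|h]|h]; auto; [subst; lia|].
  apply p_lt in h. lia.
Qed.

Lemma primeb_p i : primeb (p i) = true.
Proof. apply NatPrime.primeb_prime, p_primes. eauto. Qed.

Lemma p_ge1 i : 1 <= INR (p i).
Proof. pose proof (NatPrime.primeb_ge2 _ (primeb_p i)). apply (le_INR 1). lia. Qed.

Lemma p_ge_id i : (i <= p i)%nat.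
Proof. induction i; [lia | specialize (p_lt_S i); lia]. Qed.

Lemma primeb_enum n : primeb n = true -> exists i, p i = n.
Proof. intros H. apply p_primes, NatPrime.primeb_prime. auto. Qed.

Lemma sumR_primes_enum (F : nat -> R) M :
  sumR (fun n => if primeb n then F n else 0) (p M) = sumR (fun i => F (p i)) M.
Proof.
  assert (Hgap : forall M n, (p M < n < p (S M))%nat -> primeb n = false).
  { intros M' n Hn. destruct (primeb n) eqn:E; auto.
    destruct (primeb_enum n E) as [j <-].
    assert (M' < j)%nat by (apply p_lt_inv; lia).
    assert (j < S M')%nat by (apply p_lt_inv; lia). lia. }
  induction M as [|M IH].
  - transitivity (sumR (fun _ => 0) (p 0%nat)); [|apply sumR_zero].
    apply sumR_ext. intros n Hn. destruct (primeb n) eqn:E; auto.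
    destruct (primeb_enum n E) as [[|j] <-]; [lia|]. pose proof (p_lt 0 (S j) ltac:(lia)). lia.
  - rewrite (sumR_split_at _ (p M) (p (S M))) by (specialize (p_lt_S M); lia).
    rewrite IH. simpl (sumR (fun i => F (p i)) (S M)). f_equal.
    replace (p (S M) - p M)%nat with (S (p (S M) - p M - 1)) by (specialize (p_lt_S M); lia).
    rewrite sumR_shift, Nat.add_0_r, primeb_p, (sumR_ext _ (fun _ => 0)), sumR_zero; [ring|].
    intros i Hi. rewrite (Hgap M); auto. lia.
Qed.

End PrimeEnumeration.

Lemma pair_mass_nonneg n w : 0 <= w -> INR n * w <= 1 -> 0 <= pair_mass n w.
Proof.
  intros Hw Hnw. unfold pair_mass. pose proof (INR_mul_pred_nonneg n).
  apply Rmult_le_pos; [apply Rmult_le_pos; [lra | apply pow_le; lra] | lra].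
Qed.

Definition pair_const (N : nat) (v : R) : R := INR N * (INR N - 1) / 2 * (1 - INR N / v).

Lemma pair_const_nonneg N v : 0 < v -> INR N <= v -> 0 <= pair_const N v.
Proof.
  intros Hv HNv. unfold pair_const. pose proof (INR_mul_pred_nonneg N).
  assert (INR N / v <= 1)
    by (apply Rmult_le_reg_r with v; [|unfold Rdiv; rewrite Rmult_assoc, Rinv_l]; lra).
  apply Rmult_le_pos; lra.
Qed.

Lemma pair_mass_ge_inv_sq N v n : 0 < v <= INR n -> INR N <= v ->
  pair_const N v * inv_sq n <= pair_mass N (/ INR n).
Proof.
  intros Hvn HNv. unfold pair_const, pair_mass, inv_sq.
  replace ((/ INR n) ^ 2) with (/ (INR n * INR n)) by (simpl; field; lra).
  assert (Hq : 0 < / (INR n * INR n)) by (apply Rinv_0_lt_compat; nra).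
  pose proof (INR_mul_pred_nonneg N).
  assert (INR N * / INR n <= INR N * / v)
    by (apply Rmult_le_compat_l; [apply pos_INR | apply Rinv_le_contravar; lra]).
  assert (0 <= INR N * (INR N - 1) / 2 * / (INR n * INR n)
               * ((1 - INR N * / INR n) - (1 - INR N / v)))
    by (apply Rmult_le_pos; [apply Rmult_le_pos |unfold Rdiv]; lra).
  nra.
Qed.

Section PairMassSum.
Variable p : nat -> nat.
Hypothesis p_lt_S : forall i, (p i < p (S i))%nat.
Hypothesis p_primes : forall n : nat, prime (Z.of_nat n) <-> exists i, p i = n.
Variables (N : nat) (v : R).
Hypothesis v_gt1 : 1 < v.
Hypothesis N_le_v : INR N <= v.

Let F (n : nat) : R := if Rle_dec (ln v) (ln (INR n)) then pair_mass N (/ INR n) else 0.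

Let F_prime_bounds n : primeb n = true ->
  0 <= F n /\
  pair_const N v * (if Rle_dec v (INR n) then inv_sq n else 0) <= F n.
Proof.
  intros Hn. pose proof (NatPrime.primeb_ge2 n Hn).
  assert (Hn0 : 0 < INR n) by (apply lt_0_INR; lia).
  unfold F. destruct (Rle_dec (ln v) (ln (INR n))) as [h|h].
  - assert (Hvn : v <= INR n).
    { destruct (Rle_dec v (INR n)) as [|h']; auto. apply Rnot_le_lt, ln_increasing in h'; lra. }
    destruct (Rle_dec v (INR n)); [|contradiction]. split.
    + apply pair_mass_nonneg; [left; apply Rinv_0_lt_compat; lra|].
      replace (INR N * / INR n) with (INR N / INR n) by reflexivity.
      apply Rmult_le_reg_r with (INR n); [lra|]. unfold Rdiv.
      rewrite Rmult_assoc, Rinv_l; lra.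
    + apply pair_mass_ge_inv_sq; lra.
  - destruct (Rle_dec v (INR n)) as [h2|h2]; [exfalso; apply h, ln_le; lra | lra].
Qed.

Lemma sum_pair_mass_above_ge B :
  pair_const N v * prime_inv_sq_tail v B
  <= sumR (pair_mass_above p N (ln v)) (S B).
Proof.
  change (sumR (pair_mass_above p N (ln v)) (S B)) with (sumR (fun m => F (p m)) (S B)).
  rewrite <- (sumR_primes_enum p p_lt_S p_primes F).
  set (h := fun n => if primeb n then F n else 0).
  assert (Hh : forall n, 0 <= h n)
    by (intros n; unfold h; destruct (primeb n) eqn:E; [apply F_prime_bounds | lra]; auto).
  assert (Hmono : sumR h (S B) <= sumR h (p (S B)))
    by (apply sumR_le_mono; auto; apply p_ge_id; auto).
  rewrite sumR_shift in Hmono. pose proof (Hh 0%nat).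
  unfold prime_inv_sq_tail. rewrite <- sumR_scal.
  enough (sumR (fun n => pair_const N v *
            (if Rle_dec v (INR (S n)) then if primeb (S n) then inv_sq (S n) else 0 else 0)) B
          <= sumR (fun n => h (S n)) B) by lra.
  apply sumR_le. intros n _. unfold h. destruct (primeb (S n)) eqn:E.
  - destruct (F_prime_bounds (S n) E) as [_ Hc]. destruct (Rle_dec v (INR (S n))); lra.
  - destruct (Rle_dec v (INR (S n))); lra.
Qed.

End PairMassSum.

(* [binom(N,2) (1 - N/v) * 11/20 >= N^2/4] once [N >= 25] and [v >= 25 N]. *)
Lemma is_phi_delta_le_pair_tail delta N v : 25 <= INR N -> 25 * INR N <= v -> is_phi delta N v ->
  delta <= pair_const N v * (11 / 20 / (v * ln v)).
Proof.
  intros HN Hv Hphi. pose proof (PhiIntegral.is_phi_bounds delta N v Hphi) as [Hup _].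
  destruct Hphi as [Hv1 _].
  assert (Hlv : 0 < ln v) by (rewrite <- ln_1; apply ln_increasing; lra).
  assert (Hvl : 0 < v * ln v) by nra.
  replace (INR N ^ 2 / (4 * v * ln v)) with (INR N ^ 2 / 4 * / (v * ln v)) in Hup by (field; lra).
  replace (pair_const N v * (11 / 20 / (v * ln v)))
    with (pair_const N v * (11 / 20) * / (v * ln v)) by (field; lra).
  apply Rle_trans with (1 := Hup). unfold pair_const.
  apply Rmult_le_compat_r; [left; apply Rinv_0_lt_compat; auto|].
  assert (INR N / v <= 1 / 25).
  { apply Rmult_le_reg_r with v; [lra|]. unfold Rdiv. rewrite Rmult_assoc, Rinv_l; lra. }
  assert (INR N * (INR N - 1) >= 24 / 25 * INR N ^ 2) by (simpl; nra).
  assert (INR N * (INR N - 1) * (1 - INR N / v) >= INR N * (INR N - 1) * (24 / 25))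
    by (apply Rle_ge, Rmult_le_compat_l; nra).
  nra.
Qed.

Lemma probM_limit_ge p N c a M : (forall i, 1 <= INR (p i)) -> a <= probM p N M c ->
  exists l, Un_cv (fun M => probM p N M c) l /\ a <= l.
Proof.
  intros p_ge1 Ha.
  assert (Hg : Un_growing (fun M => probM p N M c)) by (intros m; apply probM_le_S; auto).
  assert (Hb : has_ub (fun M => probM p N M c))
    by (exists 1; intros x [m ->]; apply probM_le1; auto).
  destruct (growing_cv _ Hg Hb) as [l Hl].
  exists l. split; auto. pose proof (growing_ineq _ l Hg Hl M). lra.
Qed.

Theorem proposition3p2 :
  forall (p : nat -> nat) (delta : R) (phi : nat -> R),
    (forall i, (p i < p (S i))%nat) ->
    (forall n : nat, prime (Z.of_nat n) <-> exists i, p i = n) ->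
    0 < delta ->
    (forall N, (1 <= N)%nat -> is_phi delta N (phi N)) ->
    forall eps, 0 < eps ->
      exists N0 : nat, forall N, (N0 <= N)%nat ->
        exists l, Un_cv (fun M => probM p N M (ln (phi N))) l /\
                  1 - exp (- delta) - eps <= l.
Proof.
  intros p delta phi p_lt_S p_primes Hdelta Hphi eps Heps.
  destruct prime_inv_sq_tail_ge as [X0 [HX0 Htail]].
  destruct (is_phi_ge_mul delta (25 + X0) Hdelta ltac:(lra)) as [N1 Hlarge].
  exists (Nat.max N1 25). intros N HN.
  assert (HphiN : is_phi delta N (phi N)) by (apply Hphi; lia).
  assert (HN25 : 25 <= INR N) by (replace 25 with (INR 25) by (simpl; ring); apply le_INR; lia).
  pose proof (Hlarge N (phi N) ltac:(lia) HphiN) as Hv.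
  destruct (Htail (phi N) ltac:(nra)) as [B HB].
  pose proof (is_phi_delta_le_pair_tail delta N (phi N) HN25 ltac:(nra) HphiN) as Hdelta_le.
  pose proof (sum_pair_mass_above_ge p p_lt_S p_primes N (phi N) (proj1 HphiN) ltac:(nra) B).
  assert (Hconst : 0 <= pair_const N (phi N)) by (apply pair_const_nonneg; nra).
  assert (Hsum : delta <= sumR (pair_mass_above p N (ln (phi N))) (S B))
    by (pose proof (Rmult_le_compat_l _ _ _ Hconst HB); lra).
  apply (probM_limit_ge p N _ _ (S B) (p_ge1 p p_primes)).
  pose proof (probM_ge_one_sub_exp p N (ln (phi N)) (S B) (p_ge1 p p_primes)).
  assert (exp (- sumR (pair_mass_above p N (ln (phi N))) (S B)) <= exp (- delta))
    by (destruct (Rle_lt_or_eq_dec _ _ Hsum) as [h|h];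
        [left; apply exp_increasing; lra | rewrite h; lra]).
  lra.
Qed.
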